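(* Let $k\in\mathbb{R}$, $T$ large, and suppose $t\in\mathcal{S}$. Let $W_0=20|k|V_0$. Then as $X\to\infty$, \[ P_X(\tfrac12+it)^k=\big(1+O(e^{-19|k|V_0})\big)D(t,k), \] where $D(t,k)=\sum_{n\in S(X)}\alpha_k(n)n^{-1/2-it}$ and the coefficients $\alpha_k(n)$ satisfy: (i) $\alpha_k(n)$ is supported on integers $n\leqslant X^{W_0}$ and $|\alpha_k(n)|\leqslant d_{|k|}(n)$; (ii) there is a multiplicative function $\beta_k$ such that $\alpha_k(n)=\beta_k(n)$ whenever $\Omega(n)\leqslant W_0$, with $\beta_k(n)=d_k(n)$ whenever every prime power $p^m$ dividing $n$ satisfies $p^m\leqslant X$, and $|\beta_k(n)|\leqslant d_{|k|}(n)$ for all $n$.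
   Context: $\Lambda$ is the von Mangoldt function and $P_X(s)=\exp\big(\sum_{n\leqslant X}\frac{\Lambda(n)}{n^s\log n}\big)$. Let $F(t)=\sum_{n\leqslant X}\frac{\Lambda(n)}{n^{1/2+it}\log n}$, $V_0=(\log\log T)(\log\log\log T)$ and $\mathcal{S}=\{t\in[T,2T]:|\Re F(t)|\leqslant V_0,\ |\Im F(t)|\leqslant V_0\}$. The Dirichlet polynomial $D(t,k)$ is the truncated exponential series $\sum_{0\leqslant j\leqslant W_0}\frac{k^j}{j!}F(t)^j$, and $\alpha_k(n)$ are its coefficients when written as $\sum_n\alpha_k(n)n^{-1/2-it}$. $S(X)$ is the set of positive integers all of whose prime factors are $\leqslant X$. $\Omega(n)$ is the number of prime factors of $n$ counted with multiplicity. For real $k$, $d_k(n)$ is the multiplicative function with $\sum_nd_k(n)n^{-s}=\zeta(s)^k$. *)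

From Stdlib Require Import Reals Lra Lia ZArith Znumtheory List.
From Coquelicot Require Import Coquelicot.
Import ListNotations.
From Stdlib Require Import Bool.
Open Scope bool_scope.
Open Scope R_scope.

Definition sumR (f : nat -> R) (N : nat) : R :=
  fold_right Rplus 0 (map f (seq 0 (S N))).
Definition prodR (f : nat -> R) (N : nat) : R :=
  fold_right Rmult 1 (map f (seq 0 (S N))).
Definition sumC (f : nat -> C) (N : nat) : C :=
  fold_right Cplus (RtoC 0) (map f (seq 0 (S N))).
Definition sumN (f : nat -> nat) (N : nat) : nat :=
  fold_right Nat.add 0%nat (map f (seq 0 (S N))).

Definition Cexp (z : C) : C :=
  (exp (Re z) * cos (Im z), exp (Re z) * sin (Im z)).
Definition npow_neg (n : nat) (s : C) : C :=
  Cexp (Copp (Cmult (RtoC (ln (INR n))) s)).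

Definition primeb (p : nat) : bool :=
  if prime_dec (Z.of_nat p) then true else false.

Definition Lambda (n : nat) : R :=
  sumR (fun p => sumR (fun m =>
          if primeb p && Nat.ltb 0 m && Nat.eqb (p ^ m) n
          then ln (INR p) else 0) n) n.

(* multiplicity of p in n (for p >= 2, n >= 1): number of a >= 1 with p^a | n *)
Definition vp (p n : nat) : nat :=
  sumN (fun a => if Nat.ltb 0 a && Nat.eqb (n mod (p ^ a)) 0 then 1%nat else 0%nat) n.

Definition Omega (n : nat) : nat :=
  sumN (fun p => if primeb p then vp p n else 0%nat) n.

Fixpoint rising (x : R) (a : nat) : R :=
  match a with
  | O => 1
  | S a' => rising x a' * (x + INR a')
  end.

(* generalized divisor function d_k (k real): multiplicative with
   d_k(p^a) = k(k+1)...(k+a-1)/a!, i.e. the coefficients of zeta(s)^k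
   = prod_p (1 - p^{-s})^{-k}. *)
Definition dk (k : R) (n : nat) : R :=
  prodR (fun p => if primeb p then rising k (vp p n) / INR (fact (vp p n)) else 1) n.

Definition multiplicative (f : nat -> R) : Prop :=
  f 1%nat = 1 /\
  forall m n : nat, (1 <= m)%nat -> (1 <= n)%nat ->
    Nat.gcd m n = 1%nat -> f (m * n)%nat = f m * f n.

Definition smoothb (X : R) (n : nat) : bool :=
  forallb (fun p => if primeb p && Nat.eqb (n mod p) 0
                    then (if Rle_dec (INR p) X then true else false) else true)
          (seq 0 (S n)).

Definition V0 (T : R) : R := ln (ln T) * ln (ln (ln T)).
Definition W0 (k T : R) : R := 20 * Rabs k * V0 T.

Definition half_it (t : R) : C := (1/2, t).

Definition F (X t : R) : C :=
  sumC (fun n => if Nat.leb 1 n then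
                   if Rle_dec (INR n) X
                   then Cmult (RtoC (Lambda n / ln (INR n))) (npow_neg n (half_it t))
                   else RtoC 0
                 else RtoC 0) (Z.to_nat (up X)).

(* P_X(1/2+it)^k := exp(k * sum_{n<=X} Lambda(n)/(n^{1/2+it} log n)) *)
Definition PX_pow (X k t : R) : C := Cexp (Cmult (RtoC k) (F X t)).

Definition inS (T X t : R) : Prop :=
  T <= t <= 2 * T /\ Rabs (Re (F X t)) <= V0 T /\ Rabs (Im (F X t)) <= V0 T.

Definition Dtk (X T k t : R) : C :=
  sumC (fun j => if Rle_dec (INR j) (W0 k T)
                 then Cmult (RtoC (k ^ j / INR (fact j))) (pow_n (F X t) j)
                 else RtoC 0) (Z.to_nat (up (W0 k T))).

(* coefficients of F(t)^j as a Dirichlet polynomial: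
   coefficient c(d) = Lambda(d)/log d for 1 <= d <= X, and
   a_0 = delta_1, a_{j+1}(n) = sum_{d | n} c(d) a_j(n/d). *)
Definition cF (X : R) (d : nat) : R :=
  if Nat.leb 1 d then (if Rle_dec (INR d) X then Lambda d / ln (INR d) else 0) else 0.

Fixpoint aF (X : R) (j n : nat) : R :=
  match j with
  | O => if Nat.eqb n 1 then 1 else 0
  | S j' => sumR (fun d => if Nat.leb 1 d && Nat.eqb (n mod d) 0
                           then cF X d * aF X j' (n / d) else 0) n
  end.

(* alpha_k(n): coefficients of D(t,k) = sum_n alpha_k(n) n^{-1/2-it} *)
Definition alpha (X T k : R) (n : nat) : R :=
  sumR (fun j => if Rle_dec (INR j) (W0 k T)
                 then k ^ j / INR (fact j) * aF X j n else 0) (Z.to_nat (up (W0 k T))).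

(* Write [exp (k F) = sum_j k^j F^j / j!] as a Dirichlet series.  The coefficients of
   [F^j / j!] are nonnegative and supported on [X]-smooth [n] with [2^j <= n <= X^j] and
   [j <= Omega n], so truncating at [j <= W0] gives a Dirichlet polynomial of length
   [X^W0] whose coefficients agree with those of the full series [beta] when
   [Omega n <= W0].  Since [F] is supported on prime powers, [exp (k F)] is multiplicative,
   and at [p^a] its coefficient is that of [x^a] in [exp (k sum_(p^m <= X) x^m / m)]:
   this is the coefficient [d_k (p^a)] of [(1 - x)^(-k)] when [p^a <= X], and it is
   dominated termwise by that of [(1 - x)^(-|k|)] in general.
   For [t] in [S], [|k F| <= sqrt 2 |k| V0] is a small fraction of the truncation point
   [W0 = 20 |k| V0], so the Taylor remainder of [exp] there is [O (exp (-19 |k| V0))]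
   relative to the partial sum [D(t,k)]. *)

From Stdlib Require Import Reals ZArith Znumtheory.
From Coquelicot Require Import Coquelicot.
From Stdlib Require Import Lia Lra List Classical Bool.
Open Scope R_scope.

Section SumN.
Context {G : AbelianMonoid}.

Lemma sum_n_eq_zero (f : nat -> G) N :
  (forall i, (i <= N)%nat -> f i = zero) -> sum_n f N = zero.
Proof.
  induction N as [|N IH]; intros Hf.
  - rewrite sum_O. apply Hf; lia.
  - rewrite sum_Sn, IH, (Hf (S N)) by (auto; intros; apply Hf; lia). apply plus_zero_l.
Qed.

Lemma sum_n_extend (f : nat -> G) N M : (N <= M)%nat ->
  (forall i, (N < i <= M)%nat -> f i = zero) -> sum_n f M = sum_n f N.
Proof.
  induction M as [|M IH]; intros HNM Hf.
  - replace N with 0%nat by lia. reflexivity.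
  - destruct (Nat.eq_dec N (S M)) as [->|]; [reflexivity|].
    rewrite sum_Sn, IH, (Hf (S M)) by (try lia; intros; apply Hf; lia). apply plus_zero_r.
Qed.

Lemma sum_n_single (f : nat -> G) N i0 : (i0 <= N)%nat ->
  (forall i, (i <= N)%nat -> i <> i0 -> f i = zero) -> sum_n f N = f i0.
Proof.
  intros Hi0 Hf. rewrite (sum_n_extend f i0 N) by (auto; intros; apply Hf; lia).
  destruct i0 as [|i0]; [apply sum_O|].
  rewrite sum_Sn, sum_n_eq_zero by (intros; apply Hf; lia). apply plus_zero_l.
Qed.

Lemma sum_n_shift (f : nat -> G) N :
  sum_n f (S N) = plus (f 0%nat) (sum_n (fun i => f (S i)) N).
Proof.
  induction N as [|N IH].
  - rewrite sum_Sn, !sum_O. reflexivity.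
  - rewrite sum_Sn, IH, sum_Sn. symmetry; apply plus_assoc.
Qed.

Lemma sum_n_triangle (g : nat -> nat -> G) N :
  sum_n (fun j => sum_n (fun i => g i (j - i)%nat) j) N =
  sum_n (fun i => sum_n (g i) (N - i)) N.
Proof.
  induction N as [|N IH]; [rewrite !sum_O; reflexivity|].
  rewrite sum_Sn, IH, (sum_Sn (fun i => sum_n (g i) (S N - i))), Nat.sub_diag.
  rewrite (sum_n_ext_loc (fun i => sum_n (g i) (S N - i))
    (fun i => plus (sum_n (g i) (N - i)) (g i (S N - i)%nat))).
  2:{ intros i Hi. replace (S N - i)%nat with (S (N - i)) by lia. rewrite sum_Sn. do 2 f_equal. }
  rewrite sum_n_plus, sum_Sn, Nat.sub_diag, <- plus_assoc, sum_O. reflexivity.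
Qed.

Lemma sum_n_reindex (f : nat -> G) (g : nat -> nat) N M :
  (forall m, (m <= M)%nat -> (g m <= N)%nat) ->
  (forall m1 m2, (m1 <= M)%nat -> (m2 <= M)%nat -> g m1 = g m2 -> m1 = m2) ->
  (forall d, (d <= N)%nat -> f d <> zero -> exists m, (m <= M)%nat /\ d = g m) ->
  sum_n f N = sum_n (fun m => f (g m)) M.
Proof.
  intros Hrange Hinj Hsurj.
  set (h d m := if Nat.eq_dec d (g m) then f d else zero).
  transitivity (sum_n (fun d => sum_n (h d) M) N).
  - apply sum_n_ext_loc. intros d Hd. unfold h.
    destruct (classic (f d = zero)) as [Hz|Hz].
    + rewrite Hz. symmetry. apply sum_n_eq_zero. intros. destruct Nat.eq_dec; reflexivity.
    + destruct (Hsurj d Hd Hz) as [m [Hm ->]].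
      rewrite (sum_n_single _ M m Hm); [destruct Nat.eq_dec; congruence|].
      intros i Hi Hne. destruct Nat.eq_dec as [E|]; [|reflexivity].
      contradict Hne. apply Hinj; auto.
  - rewrite sum_n_switch. apply sum_n_ext_loc. intros m Hm. unfold h.
    rewrite (sum_n_single _ N (g m)); [destruct Nat.eq_dec; congruence|auto|].
    intros i _ Hi. destruct Nat.eq_dec; congruence.
Qed.

End SumN.

Lemma fold_right_Rplus_init (l : list R) a : fold_right Rplus a l = fold_right Rplus 0 l + a.
Proof. induction l as [|x l IH]; simpl; [|rewrite IH]; lra. Qed.

Lemma fold_right_Rmult_init (l : list R) a : fold_right Rmult a l = fold_right Rmult 1 l * a.
Proof. induction l as [|x l IH]; simpl; [|rewrite IH]; lra. Qed.

Lemma fold_right_Cplus_init (l : list C) a :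
  fold_right Cplus a l = Cplus (fold_right Cplus (RtoC 0) l) a.
Proof.
  induction l as [|x l IH]; simpl; [symmetry; apply Cplus_0_l|].
  rewrite IH. apply Cplus_assoc.
Qed.

Lemma fold_right_add_init (l : list nat) a :
  fold_right Nat.add a l = (fold_right Nat.add 0 l + a)%nat.
Proof. induction l as [|x l IH]; simpl; [|rewrite IH]; lia. Qed.

Lemma sumR_S f N : sumR f (S N) = sumR f N + f (S N).
Proof.
  unfold sumR. rewrite seq_S, map_app, fold_right_app. simpl.
  rewrite fold_right_Rplus_init. simpl. lra.
Qed.

Lemma sumR_O f : sumR f 0 = f 0%nat.
Proof. unfold sumR; simpl; lra. Qed.

Lemma prodR_S f N : prodR f (S N) = prodR f N * f (S N).
Proof.
  unfold prodR. rewrite seq_S, map_app, fold_right_app. simpl.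
  rewrite fold_right_Rmult_init. simpl. lra.
Qed.

Lemma prodR_O f : prodR f 0 = f 0%nat.
Proof. unfold prodR; simpl; lra. Qed.

Lemma sumC_S f N : sumC f (S N) = Cplus (sumC f N) (f (S N)).
Proof.
  unfold sumC. rewrite (seq_S (S N)), map_app, fold_right_app. cbn [map fold_right].
  rewrite fold_right_Cplus_init. f_equal. apply Cplus_0_r.
Qed.

Lemma sumC_O f : sumC f 0 = f 0%nat.
Proof. unfold sumC; simpl. apply Cplus_0_r. Qed.

Lemma sumN_S f N : sumN f (S N) = (sumN f N + f (S N))%nat.
Proof.
  unfold sumN. rewrite seq_S, map_app, fold_right_app. simpl.
  rewrite fold_right_add_init. simpl. lia.
Qed.

Lemma sumR_sum_n f N : sumR f N = @sum_n R_AbelianMonoid f N.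
Proof.
  induction N as [|N IH]; [rewrite sumR_O, sum_O|rewrite sumR_S, sum_Sn, IH]; reflexivity.
Qed.

Lemma sumC_sum_n f N : sumC f N = @sum_n C_AbelianMonoid f N.
Proof.
  induction N as [|N IH]; [rewrite sumC_O, sum_O|rewrite sumC_S, sum_Sn, IH]; reflexivity.
Qed.

Lemma INR_sumN f N : INR (sumN f N) = sumR (fun i => INR (f i)) N.
Proof.
  induction N as [|N IH].
  - unfold sumN, sumR; simpl. rewrite Nat.add_0_r, Rplus_0_r. reflexivity.
  - rewrite sumN_S, sumR_S, plus_INR, IH. reflexivity.
Qed.

Lemma RtoC_sumR f N : RtoC (sumR f N) = sumC (fun i => RtoC (f i)) N.
Proof.
  induction N as [|N IH]; [rewrite sumR_O, sumC_O; reflexivity|].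
  rewrite sumR_S, sumC_S, RtoC_plus, IH. reflexivity.
Qed.

Lemma Re_sumC f N : Re (sumC f N) = sumR (fun i => Re (f i)) N.
Proof.
  induction N as [|N IH]; [rewrite sumC_O, sumR_O; reflexivity|].
  rewrite sumC_S, sumR_S, <- IH. reflexivity.
Qed.

Section SumR.
Implicit Types (f g : nat -> R).

Lemma sumR_ext f g N : (forall i, (i <= N)%nat -> f i = g i) -> sumR f N = sumR g N.
Proof. intros; rewrite !sumR_sum_n; apply sum_n_ext_loc; auto. Qed.

Lemma sumR_eq0 f N : (forall i, (i <= N)%nat -> f i = 0) -> sumR f N = 0.
Proof. intros; rewrite sumR_sum_n; apply (sum_n_eq_zero (G := R_AbelianMonoid)); auto. Qed.

Lemma sumR_extend f N M : (N <= M)%nat ->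
  (forall i, (N < i <= M)%nat -> f i = 0) -> sumR f M = sumR f N.
Proof. intros; rewrite !sumR_sum_n; apply (sum_n_extend (G := R_AbelianMonoid)); auto. Qed.

Lemma sumR_support f N1 N2 K : (K <= N1)%nat -> (K <= N2)%nat ->
  (forall i, (K < i)%nat -> f i = 0) -> sumR f N1 = sumR f N2.
Proof.
  intros H1 H2 Hf. rewrite (sumR_extend f K N1), (sumR_extend f K N2); auto; intros; apply Hf; lia.
Qed.

Lemma sumR_single f N i0 : (i0 <= N)%nat ->
  (forall i, (i <= N)%nat -> i <> i0 -> f i = 0) -> sumR f N = f i0.
Proof. intros; rewrite sumR_sum_n; apply (sum_n_single (G := R_AbelianMonoid)); auto. Qed.

Lemma sumR_shift f N : sumR f (S N) = f 0%nat + sumR (fun i => f (S i)) N.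
Proof. rewrite !sumR_sum_n; apply (sum_n_shift (G := R_AbelianMonoid)). Qed.

Lemma sumR_plus f g N : sumR (fun i => f i + g i) N = sumR f N + sumR g N.
Proof. rewrite !sumR_sum_n; apply (sum_n_plus (G := R_AbelianMonoid)). Qed.

Lemma sumR_mult_l a f N : sumR (fun i => a * f i) N = a * sumR f N.
Proof. rewrite !sumR_sum_n; apply (sum_n_mult_l (K := R_Ring)). Qed.

Lemma sumR_mult_r a f N : sumR (fun i => f i * a) N = sumR f N * a.
Proof. rewrite !sumR_sum_n; apply (sum_n_mult_r (K := R_Ring)). Qed.

Lemma sumR_switch (u : nat -> nat -> R) m n :
  sumR (fun i => sumR (u i) n) m = sumR (fun j => sumR (fun i => u i j) m) n.
Proof.
  rewrite !sumR_sum_n, (sum_n_ext _ (fun i => sum_n (u i) n)), sum_n_switch.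
  - apply sum_n_ext. intros; symmetry; apply sumR_sum_n.
  - intros; apply sumR_sum_n.
Qed.

Lemma sumR_triangle (g : nat -> nat -> R) N :
  sumR (fun j => sumR (fun i => g i (j - i)%nat) j) N = sumR (fun i => sumR (g i) (N - i)) N.
Proof.
  rewrite !sumR_sum_n, (sum_n_ext _ (fun j => sum_n (fun i => g i (j - i)%nat) j)),
    (sum_n_ext (fun i => sumR _ _) (fun i => sum_n (g i) (N - i))) by (intros; apply sumR_sum_n).
  apply (sum_n_triangle (G := R_AbelianMonoid)).
Qed.

Lemma sumR_reindex f (g : nat -> nat) N M :
  (forall m, (m <= M)%nat -> (g m <= N)%nat) ->
  (forall m1 m2, (m1 <= M)%nat -> (m2 <= M)%nat -> g m1 = g m2 -> m1 = m2) ->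
  (forall d, (d <= N)%nat -> f d <> 0 -> exists m, (m <= M)%nat /\ d = g m) ->
  sumR f N = sumR (fun m => f (g m)) M.
Proof. intros; rewrite !sumR_sum_n; apply (sum_n_reindex (G := R_AbelianMonoid)); auto. Qed.

Lemma sumR_le f g N : (forall i, (i <= N)%nat -> f i <= g i) -> sumR f N <= sumR g N.
Proof.
  induction N as [|N IH]; intros H; [rewrite !sumR_O; auto|].
  rewrite !sumR_S. apply Rplus_le_compat; auto.
Qed.

Lemma sumR_ge0 f N : (forall i, (i <= N)%nat -> 0 <= f i) -> 0 <= sumR f N.
Proof. intros H. rewrite <- (sumR_eq0 (fun _ => 0) N) by auto. apply sumR_le; auto. Qed.

Lemma sumR_le_upper f N M : (N <= M)%nat -> (forall i, 0 <= f i) -> sumR f N <= sumR f M.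
Proof.
  intros HNM Hf. induction M as [|M IH].
  - replace N with 0%nat by lia. lra.
  - destruct (Nat.eq_dec N (S M)) as [->|]; [lra|].
    rewrite sumR_S. specialize (Hf (S M)). assert (sumR f N <= sumR f M) by (apply IH; lia). lra.
Qed.

Lemma Rabs_sumR f N : Rabs (sumR f N) <= sumR (fun i => Rabs (f i)) N.
Proof.
  induction N as [|N IH]; [rewrite !sumR_O; lra|].
  rewrite !sumR_S. eapply Rle_trans; [apply Rabs_triang|lra].
Qed.

Lemma sumR_neq0 f N : sumR f N <> 0 -> exists i, (i <= N)%nat /\ f i <> 0.
Proof.
  intros H. apply NNPP. intros Hn. apply H, sumR_eq0. intros i Hi.
  apply NNPP. intros Hi'. apply Hn. eauto.
Qed.

End SumR.

Lemma prodR_ext f g N : (forall i, (i <= N)%nat -> f i = g i) -> prodR f N = prodR g N.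
Proof. induction N as [|N IH]; intros H; [rewrite !prodR_O|rewrite !prodR_S, IH, H]; auto. Qed.

Lemma prodR_eq1 f N : (forall i, (i <= N)%nat -> f i = 1) -> prodR f N = 1.
Proof.
  induction N as [|N IH]; intros H; [rewrite prodR_O; auto|].
  rewrite prodR_S, IH, (H (S N)); auto; lra.
Qed.

Lemma prodR_mult f g N : prodR (fun i => f i * g i) N = prodR f N * prodR g N.
Proof. induction N as [|N IH]; [rewrite !prodR_O|rewrite !prodR_S, IH]; lra. Qed.

Lemma prodR_extend f N M : (N <= M)%nat ->
  (forall i, (N < i <= M)%nat -> f i = 1) -> prodR f M = prodR f N.
Proof.
  induction M as [|M IH]; intros HNM H.
  - replace N with 0%nat by lia. reflexivity.
  - destruct (Nat.eq_dec N (S M)) as [->|]; [reflexivity|].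
    rewrite prodR_S, IH, (H (S M)) by (try lia; intros; apply H; lia). lra.
Qed.

Lemma prodR_single f N i0 : (i0 <= N)%nat ->
  (forall i, (i <= N)%nat -> i <> i0 -> f i = 1) -> prodR f N = f i0.
Proof.
  intros Hi0 H. rewrite (prodR_extend f i0 N) by (auto; intros; apply H; lia).
  destruct i0 as [|i0]; [apply prodR_O|].
  rewrite prodR_S, prodR_eq1 by (intros; apply H; lia). lra.
Qed.

Section SumC.
Implicit Types (f g : nat -> C).

Lemma sumC_ext f g N : (forall i, (i <= N)%nat -> f i = g i) -> sumC f N = sumC g N.
Proof. intros; rewrite !sumC_sum_n; apply sum_n_ext_loc; auto. Qed.

Lemma sumC_eq0 f N : (forall i, (i <= N)%nat -> f i = RtoC 0) -> sumC f N = RtoC 0.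
Proof. intros; rewrite sumC_sum_n; apply (sum_n_eq_zero (G := C_AbelianMonoid)); auto. Qed.

Lemma sumC_extend f N M : (N <= M)%nat ->
  (forall i, (N < i <= M)%nat -> f i = RtoC 0) -> sumC f M = sumC f N.
Proof. intros; rewrite !sumC_sum_n; apply (sum_n_extend (G := C_AbelianMonoid)); auto. Qed.

Lemma sumC_support f N1 N2 K : (K <= N1)%nat -> (K <= N2)%nat ->
  (forall i, (K < i)%nat -> f i = RtoC 0) -> sumC f N1 = sumC f N2.
Proof.
  intros H1 H2 Hf. rewrite (sumC_extend f K N1), (sumC_extend f K N2); auto; intros; apply Hf; lia.
Qed.

Lemma sumC_mult_l a f N : sumC (fun i => Cmult a (f i)) N = Cmult a (sumC f N).
Proof. rewrite !sumC_sum_n; apply (sum_n_mult_l (K := C_Ring)). Qed.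

Lemma sumC_mult_r a f N : sumC (fun i => Cmult (f i) a) N = Cmult (sumC f N) a.
Proof. rewrite !sumC_sum_n; apply (sum_n_mult_r (K := C_Ring)). Qed.

Lemma sumC_switch (u : nat -> nat -> C) m n :
  sumC (fun i => sumC (u i) n) m = sumC (fun j => sumC (fun i => u i j) m) n.
Proof.
  rewrite !sumC_sum_n, (sum_n_ext _ (fun i => sum_n (u i) n)), sum_n_switch.
  - apply sum_n_ext. intros; symmetry; apply sumC_sum_n.
  - intros; apply sumC_sum_n.
Qed.

Lemma sumC_reindex f (g : nat -> nat) N M :
  (forall m, (m <= M)%nat -> (g m <= N)%nat) ->
  (forall m1 m2, (m1 <= M)%nat -> (m2 <= M)%nat -> g m1 = g m2 -> m1 = m2) ->
  (forall d, (d <= N)%nat -> f d <> RtoC 0 -> exists m, (m <= M)%nat /\ d = g m) ->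
  sumC f N = sumC (fun m => f (g m)) M.
Proof. intros; rewrite !sumC_sum_n; apply (sum_n_reindex (G := C_AbelianMonoid)); auto. Qed.

End SumC.

(** * Primes, valuations and [d_k] *)

Definition nprime (p : nat) : Prop := prime (Z.of_nat p).

Definition prime_power (d : nat) : Prop :=
  exists q e, nprime q /\ (1 <= e)%nat /\ d = (q ^ e)%nat.

Lemma primeb_true_iff p : primeb p = true <-> nprime p.
Proof. unfold primeb, nprime. destruct prime_dec; split; auto; discriminate. Qed.

Lemma primeb_false_iff p : primeb p = false <-> ~ nprime p.
Proof. unfold primeb, nprime. destruct prime_dec; split; auto; try discriminate; tauto. Qed.

Lemma Z_of_nat_divide a b : Nat.divide a b -> Z.divide (Z.of_nat a) (Z.of_nat b).
Proof. intros [c ->]. exists (Z.of_nat c). lia. Qed.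

Lemma Z_of_nat_divide_inv a b : Z.divide (Z.of_nat a) (Z.of_nat b) -> Nat.divide a b.
Proof.
  intros [c Hc]. destruct (Nat.eq_dec a 0) as [->|Ha].
  - exists 0%nat. lia.
  - assert (0 <= c)%Z by nia. exists (Z.to_nat c).
    apply Nat2Z.inj. rewrite Nat2Z.inj_mul, Z2Nat.id; lia.
Qed.

Lemma eqb_mod_divide d n : Nat.eqb (n mod d) 0 = true <-> Nat.divide d n.
Proof. rewrite Nat.eqb_eq. apply Nat.Lcm0.mod_divide. Qed.

Lemma eqb_mod_not_divide d n : ~ Nat.divide d n -> Nat.eqb (n mod d) 0 = false.
Proof. intros Hn. apply not_true_iff_false. rewrite eqb_mod_divide; auto. Qed.

Lemma nprime_ge2 p : nprime p -> (2 <= p)%nat.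
Proof. intros H. apply prime_ge_2 in H. lia. Qed.

Lemma nprime_divide_mul p a b : nprime p -> Nat.divide p (a * b) ->
  Nat.divide p a \/ Nat.divide p b.
Proof.
  intros Hp Hd. apply Z_of_nat_divide in Hd. rewrite Nat2Z.inj_mul in Hd.
  destruct (prime_mult _ Hp _ _ Hd); [left|right]; apply Z_of_nat_divide_inv; auto.
Qed.

Lemma nprime_divide_prime_pow p q e : nprime p -> nprime q -> Nat.divide p (q ^ e) -> p = q.
Proof.
  intros Hp Hq. induction e as [|e IH]; simpl; intros Hd.
  - apply Nat.divide_1_r in Hd. apply nprime_ge2 in Hp. lia.
  - destruct (nprime_divide_mul _ _ _ Hp Hd) as [Hpq|]; auto.
    apply Z_of_nat_divide in Hpq. apply Nat2Z.inj, prime_div_prime; auto.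
Qed.

Lemma divide_pow_self p e : (1 <= e)%nat -> Nat.divide p (p ^ e).
Proof. intros. exists (p ^ (e - 1))%nat. rewrite Nat.mul_comm, <- Nat.pow_succ_r'. f_equal. lia. Qed.

Lemma pow_ge1 p a : (1 <= p)%nat -> (1 <= p ^ a)%nat.
Proof. intros. apply Nat.le_trans with (p ^ 0)%nat; [simpl; lia|apply Nat.pow_le_mono_r; lia]. Qed.

Lemma pow_ge_base q e : (1 <= q)%nat -> (1 <= e)%nat -> (q <= q ^ e)%nat.
Proof. intros. rewrite <- (Nat.pow_1_r q) at 1. apply Nat.pow_le_mono_r; lia. Qed.

Lemma exists_prime_divisor n : (2 <= n)%nat -> exists q, nprime q /\ Nat.divide q n.
Proof.
  induction n as [n IH] using (well_founded_induction lt_wf). intros Hn.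
  destruct (prime_dec (Z.of_nat n)) as [Hp|Hp].
  - exists n. split; [auto|apply Nat.divide_refl].
  - destruct (not_prime_divide (Z.of_nat n)) as [m [Hm Hd]]; [lia|auto|].
    assert (Hd' : Nat.divide (Z.to_nat m) n)
      by (apply Z_of_nat_divide_inv; rewrite Z2Nat.id; auto; lia).
    destruct (IH (Z.to_nat m)) as [q [Hq Hqm]]; try lia.
    exists q. split; auto. eapply Nat.divide_trans; eauto.
Qed.

Lemma coprime_prime_pow p m a : nprime p -> ~ Nat.divide p m -> Nat.gcd (p ^ a) m = 1%nat.
Proof.
  intros Hp Hm. set (g := Nat.gcd (p ^ a) m).
  destruct (Nat.eq_dec g 0) as [H0|H0].
  - apply Nat.gcd_eq_0 in H0. destruct H0 as [_ ->]. exfalso. apply Hm. exists 0%nat. lia.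
  - destruct (Nat.eq_dec g 1) as [|H1]; auto. exfalso.
    destruct (exists_prime_divisor g) as [q [Hq Hqg]]; [lia|].
    assert (Nat.divide q (p ^ a)) by (apply (Nat.divide_trans q g _ Hqg), Nat.gcd_divide_l).
    assert (Nat.divide q m) by (apply (Nat.divide_trans q g _ Hqg), Nat.gcd_divide_r).
    assert (q = p) by (eapply nprime_divide_prime_pow; eauto). subst. auto.
Qed.

Lemma coprime_divide_l m n d : Nat.gcd m n = 1%nat -> Nat.divide d m -> Nat.gcd d n = 1%nat.
Proof.
  intros H Hd. apply Nat.divide_1_r. rewrite <- H. apply Nat.gcd_greatest.
  - eapply Nat.divide_trans; [apply Nat.gcd_divide_l|auto].
  - apply Nat.gcd_divide_r.
Qed.

Lemma coprime_not_divide_both p m n : nprime p -> Nat.gcd m n = 1%nat ->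
  Nat.divide p m -> ~ Nat.divide p n.
Proof.
  intros Hp Hg Hm Hn. assert (Nat.divide p 1) by (rewrite <- Hg; apply Nat.gcd_greatest; auto).
  apply Nat.divide_1_r in H. apply nprime_ge2 in Hp. lia.
Qed.

Lemma factor_prime_out p n : nprime p -> (1 <= n)%nat ->
  exists v m, n = (p ^ v * m)%nat /\ ~ Nat.divide p m /\ (1 <= m)%nat.
Proof.
  intros Hp. induction n as [n IH] using (well_founded_induction lt_wf). intros Hn.
  pose proof (nprime_ge2 _ Hp).
  destruct (classic (Nat.divide p n)) as [[c Hc]|Hd].
  - destruct (IH c) as [v [m [H1 [H2 H3]]]]; try nia.
    exists (S v), m. subst. simpl. split; [nia|auto].
  - exists 0%nat, n. simpl. split; [lia|auto].
Qed.

Lemma prime_pow_divide_iff p v m a : nprime p -> ~ Nat.divide p m ->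
  Nat.divide (p ^ a) (p ^ v * m) <-> (a <= v)%nat.
Proof.
  intros Hp Hm. pose proof (nprime_ge2 _ Hp). split; intros Hd.
  - destruct (le_lt_dec a v) as [|Hlt]; auto. exfalso. apply Hm.
    assert (Hd' : Nat.divide (p ^ v * p) (p ^ v * m)).
    { eapply Nat.divide_trans; [|apply Hd]. exists (p ^ (a - S v))%nat.
      rewrite (Nat.mul_comm (p ^ v)), <- Nat.pow_succ_r', <- Nat.pow_add_r. f_equal. lia. }
    apply Nat.mul_divide_cancel_l in Hd'; auto. pose proof (pow_ge1 p v). lia.
  - exists (p ^ (v - a) * m)%nat. rewrite Nat.mul_shuffle0, <- Nat.pow_add_r. do 2 f_equal. lia.
Qed.

Lemma coprime_factor_ind (Q : nat -> Prop) : Q 1%nat ->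
  (forall p a m, nprime p -> (1 <= a)%nat -> ~ Nat.divide p m -> (1 <= m)%nat ->
     Q m -> Q (p ^ a * m)%nat) ->
  forall n, (1 <= n)%nat -> Q n.
Proof.
  intros H1 HS n. induction n as [n IH] using (well_founded_induction lt_wf). intros Hn.
  destruct (Nat.eq_dec n 1) as [->|]; auto.
  destruct (exists_prime_divisor n) as [p [Hp Hpn]]; [lia|].
  destruct (factor_prime_out p n Hp Hn) as [v [m [Hnm [Hpm Hm]]]].
  assert (Hv : (1 <= v)%nat).
  { destruct v; [|lia]. simpl in Hnm. rewrite Nat.add_0_r in Hnm. subst. tauto. }
  pose proof (nprime_ge2 _ Hp). pose proof (pow_ge_base p v ltac:(lia) Hv).
  rewrite Hnm. apply HS; auto. apply IH; auto. nia.
Qed.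

Lemma prime_pow_inj p q m e : nprime p -> nprime q -> (1 <= m)%nat ->
  (p ^ m = q ^ e)%nat -> p = q /\ m = e.
Proof.
  intros Hp Hq Hm H.
  assert (p = q) as <-.
  { apply (nprime_divide_prime_pow p q e); auto. rewrite <- H. apply divide_pow_self; auto. }
  split; auto. apply Nat.pow_inj_r in H; auto. apply nprime_ge2 in Hp; lia.
Qed.

Lemma sumR_indicator_range v N : (v <= N)%nat ->
  sumR (fun a => if Nat.ltb 0 a && Nat.leb a v then 1 else 0) N = INR v.
Proof.
  intros H. rewrite (sumR_extend _ v N) by
    (auto; intros a Ha; destruct (Nat.leb_spec a v); lia || (rewrite andb_false_r; reflexivity)).
  clear H. induction v as [|v IH]; [rewrite sumR_O; reflexivity|].
  rewrite sumR_S, S_INR, <- IH. simpl (Nat.ltb 0 (S v)). rewrite Nat.leb_refl. f_equal.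
  apply sumR_ext. intros a Ha. destruct (Nat.leb_spec a v), (Nat.leb_spec a (S v)); lia || reflexivity.
Qed.

Lemma vp_prime_pow_mul p v m : nprime p -> ~ Nat.divide p m -> (1 <= m)%nat -> vp p (p ^ v * m) = v.
Proof.
  intros Hp Hm Hm1. pose proof (nprime_ge2 _ Hp). apply INR_eq. unfold vp. rewrite INR_sumN.
  pose proof (Nat.pow_gt_lin_r p v ltac:(lia)).
  rewrite <- (sumR_indicator_range v (p ^ v * m)) by nia.
  apply sumR_ext. intros a _. destruct (Nat.ltb 0 a); simpl; [|reflexivity].
  destruct (Nat.leb_spec a v) as [Hav|Hav].
  - rewrite (proj2 (eqb_mod_divide _ _)) by (apply prime_pow_divide_iff; auto). reflexivity.
  - rewrite eqb_mod_not_divide; [reflexivity|]. rewrite prime_pow_divide_iff; auto. lia.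
Qed.

Lemma vp_not_divide p n : nprime p -> ~ Nat.divide p n -> (1 <= n)%nat -> vp p n = 0%nat.
Proof. intros. rewrite <- (Nat.mul_1_l n) at 1. apply (vp_prime_pow_mul p 0); auto. Qed.

Lemma vp_prime_pow p a : nprime p -> vp p (p ^ a) = a.
Proof.
  intros Hp. rewrite <- (Nat.mul_1_r (p ^ a)). apply vp_prime_pow_mul; auto.
  intros Hd. apply Nat.divide_1_r in Hd. apply nprime_ge2 in Hp. lia.
Qed.

Lemma vp_mul p m n : nprime p -> (1 <= m)%nat -> (1 <= n)%nat ->
  vp p (m * n) = (vp p m + vp p n)%nat.
Proof.
  intros Hp Hm Hn.
  destruct (factor_prime_out p m Hp Hm) as [u [m' [-> [Hm1 Hm2]]]].
  destruct (factor_prime_out p n Hp Hn) as [v [n' [-> [Hn1 Hn2]]]].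
  replace (p ^ u * m' * (p ^ v * n'))%nat with (p ^ (u + v) * (m' * n'))%nat
    by (rewrite Nat.pow_add_r; lia).
  rewrite !vp_prime_pow_mul; auto; [|nia].
  intros Hd. destruct (nprime_divide_mul _ _ _ Hp Hd); auto.
Qed.

Lemma vp_lt p n : nprime p -> (1 <= n)%nat -> (n < p)%nat -> vp p n = 0%nat.
Proof. intros. apply vp_not_divide; auto. intros Hd. apply Nat.divide_pos_le in Hd; lia. Qed.

Lemma Lambda_prime_pow q e : nprime q -> (1 <= e)%nat -> Lambda (q ^ e) = ln (INR q).
Proof.
  intros Hq He. pose proof (nprime_ge2 _ Hq). pose proof (Nat.pow_gt_lin_r q e ltac:(lia)).
  unfold Lambda. rewrite (sumR_single _ _ q) by
    (try (apply pow_ge_base; lia); intros p _ Hp; apply sumR_eq0; intros m _;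
     destruct (primeb p && Nat.ltb 0 m && Nat.eqb (p ^ m) (q ^ e)) eqn:E; auto;
     apply andb_prop in E as [E E3]; apply andb_prop in E as [E1 E2];
     apply primeb_true_iff in E1; apply Nat.ltb_lt in E2; apply Nat.eqb_eq in E3;
     destruct (prime_pow_inj p q m e); auto; lia).
  rewrite (sumR_single _ _ e) by
    (try lia; intros m _ Hm; destruct (primeb q && Nat.ltb 0 m && Nat.eqb (q ^ m) (q ^ e)) eqn:E; auto;
     apply andb_prop in E as [_ E]; apply Nat.eqb_eq, Nat.pow_inj_r in E; lia).
  replace (primeb q) with true by (symmetry; apply primeb_true_iff; auto).
  replace (Nat.ltb 0 e) with true by (symmetry; apply Nat.ltb_lt; lia).
  rewrite Nat.eqb_refl. reflexivity.
Qed.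

Lemma Lambda_not_prime_pow n : ~ prime_power n -> Lambda n = 0.
Proof.
  intros Hn. unfold Lambda. apply sumR_eq0. intros p _. apply sumR_eq0. intros m _.
  destruct (primeb p && Nat.ltb 0 m && Nat.eqb (p ^ m) n) eqn:E; auto.
  apply andb_prop in E as [E E3]. apply andb_prop in E as [E1 E2].
  apply primeb_true_iff in E1. apply Nat.ltb_lt in E2. apply Nat.eqb_eq in E3.
  exfalso. apply Hn. exists p, m. split; [auto|split; lia].
Qed.

Lemma Omega_sumR n N : (1 <= n)%nat -> (n <= N)%nat ->
  INR (Omega n) = sumR (fun p => INR (if primeb p then vp p n else 0%nat)) N.
Proof.
  intros. unfold Omega. rewrite INR_sumN. symmetry. apply sumR_extend; auto.
  intros p Hp. destruct (primeb p) eqn:E; auto.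
  apply primeb_true_iff in E. rewrite vp_lt; auto. lia.
Qed.

Lemma Omega_mul m n : (1 <= m)%nat -> (1 <= n)%nat -> Omega (m * n) = (Omega m + Omega n)%nat.
Proof.
  intros. apply INR_eq. rewrite plus_INR.
  rewrite (Omega_sumR (m * n) (m * n)), (Omega_sumR m (m * n)), (Omega_sumR n (m * n)),
    <- sumR_plus by nia.
  apply sumR_ext. intros p _. destruct (primeb p) eqn:E; simpl; [|lra].
  apply primeb_true_iff in E. rewrite vp_mul, plus_INR; auto.
Qed.

Lemma Omega_prime_pow q e : nprime q -> Omega (q ^ e) = e.
Proof.
  intros Hq. pose proof (nprime_ge2 _ Hq). pose proof (pow_ge1 q e ltac:(lia)). apply INR_eq.
  rewrite (Omega_sumR (q ^ e) (q ^ e)) by lia.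
  destruct e as [|e]; [simpl; unfold sumR; simpl; lra|].
  rewrite (sumR_single _ _ q).
  - replace (primeb q) with true by (symmetry; apply primeb_true_iff; auto). rewrite vp_prime_pow; auto.
  - apply pow_ge_base; lia.
  - intros p _ Hp. destruct (primeb p) eqn:E; auto. apply primeb_true_iff in E.
    rewrite vp_not_divide; auto. intros Hd. apply Hp. eapply nprime_divide_prime_pow; eauto.
Qed.

Definition negbinom (k : R) (a : nat) : R := rising k a / INR (fact a).

Lemma negbinom_0 k : negbinom k 0 = 1.
Proof. unfold negbinom. simpl. field. Qed.

Lemma dk_prodR k n N : (1 <= n)%nat -> (n <= N)%nat ->
  dk k n = prodR (fun p => if primeb p then negbinom k (vp p n) else 1) N.
Proof.
  intros. unfold dk. symmetry. apply prodR_extend; auto. intros p Hp.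
  destruct (primeb p) eqn:E; auto. apply primeb_true_iff in E.
  rewrite vp_lt by (auto; lia). simpl. field.
Qed.

Lemma dk_1 k : dk k 1 = 1.
Proof.
  unfold dk. rewrite prodR_S, prodR_O.
  replace (primeb 0) with false by (apply eq_sym, primeb_false_iff; intros H; apply nprime_ge2 in H; lia).
  replace (primeb 1) with false by (apply eq_sym, primeb_false_iff; intros H; apply nprime_ge2 in H; lia).
  ring.
Qed.

Lemma dk_prime_pow k p a : nprime p -> dk k (p ^ a) = negbinom k a.
Proof.
  intros Hp. pose proof (nprime_ge2 _ Hp). destruct a as [|a]; [simpl; rewrite dk_1, negbinom_0; reflexivity|].
  unfold dk. rewrite (prodR_single _ _ p).
  - replace (primeb p) with true by (symmetry; apply primeb_true_iff; auto). rewrite vp_prime_pow; auto.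
  - apply pow_ge_base; lia.
  - intros q _ Hq. destruct (primeb q) eqn:E; auto. apply primeb_true_iff in E.
    rewrite vp_not_divide; [simpl; field|auto| |apply pow_ge1; lia].
    intros Hd. apply Hq. eapply nprime_divide_prime_pow; eauto.
Qed.

Lemma dk_mul_coprime k m n : (1 <= m)%nat -> (1 <= n)%nat -> Nat.gcd m n = 1%nat ->
  dk k (m * n) = dk k m * dk k n.
Proof.
  intros Hm Hn Hg.
  rewrite (dk_prodR k (m * n) (m * n)), (dk_prodR k m (m * n)), (dk_prodR k n (m * n)),
    <- prodR_mult by nia.
  apply prodR_ext. intros p _. destruct (primeb p) eqn:E; [|ring].
  apply primeb_true_iff in E. rewrite vp_mul; auto.
  destruct (classic (Nat.divide p m)) as [Hpm|Hpm].
  - rewrite (vp_not_divide p n), Nat.add_0_r, negbinom_0 by (auto; eapply coprime_not_divide_both; eauto).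
    ring.
  - rewrite (vp_not_divide p m), negbinom_0 by auto. simpl. ring.
Qed.

(** * The coefficients of [exp (k F)] *)

Definition dconv (c a : nat -> R) (n : nat) : R :=
  sumR (fun d => if Nat.leb 1 d && Nat.eqb (n mod d) 0 then c d * a (n / d)%nat else 0) n.

Lemma dconv_neq0 c a n : dconv c a n <> 0 ->
  exists d, (1 <= d)%nat /\ n = (d * (n / d))%nat /\ c d <> 0 /\ a (n / d)%nat <> 0.
Proof.
  intros H. apply sumR_neq0 in H as [d [_ Hd]].
  destruct (Nat.leb_spec 1 d) as [Hd1|]; [|simpl in Hd; lra].
  destruct (Nat.eqb (n mod d) 0) eqn:E; simpl in Hd; [|lra].
  exists d. apply eqb_mod_divide in E as [q ->]. rewrite Nat.div_mul in * by lia.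
  split; [lia|split; [lia|]]. split; intros Z; apply Hd; rewrite Z; ring.
Qed.

Lemma dconv_ext c a b n :
  (forall d, (1 <= d)%nat -> Nat.divide d n -> a (n / d)%nat = b (n / d)%nat) ->
  dconv c a n = dconv c b n.
Proof.
  intros H. apply sumR_ext. intros d _.
  destruct (Nat.leb_spec 1 d); simpl; [|reflexivity].
  destruct (Nat.eqb (n mod d) 0) eqn:E; [|reflexivity].
  apply eqb_mod_divide in E. rewrite H; auto.
Qed.

Lemma dconv_sumR c (f : nat -> nat -> R) j n :
  dconv c (fun x => sumR (fun i => f i x) j) n = sumR (fun i => dconv c (f i) n) j.
Proof.
  unfold dconv. rewrite sumR_switch. apply sumR_ext. intros d _.
  destruct (_ && _); [symmetry; apply sumR_mult_l|symmetry; apply sumR_eq0; reflexivity].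
Qed.

Lemma dconv_scale_l c a r n : dconv c (fun x => r * a x) n = r * dconv c a n.
Proof.
  unfold dconv. rewrite <- sumR_mult_l. apply sumR_ext. intros d _. destruct (_ && _); ring.
Qed.

Lemma dconv_scale_r c a r n : dconv c (fun x => a x * r) n = dconv c a n * r.
Proof.
  unfold dconv. rewrite <- sumR_mult_r. apply sumR_ext. intros d _. destruct (_ && _); ring.
Qed.

Lemma prime_power_divide_coprime_mul d m n : prime_power d -> Nat.gcd m n = 1%nat ->
  (~ Nat.divide d n /\ (Nat.divide d (m * n) <-> Nat.divide d m)) \/
  (~ Nat.divide d m /\ (Nat.divide d (m * n) <-> Nat.divide d n)).
Proof.
  intros [q [e [Hq [He ->]]]] Hg.
  assert (Hnd : forall x, ~ Nat.divide q x -> ~ Nat.divide (q ^ e) x /\ Nat.gcd (q ^ e) x = 1%nat).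
  { intros x Hx. split; [|apply coprime_prime_pow; auto].
    intros Hd. apply Hx. eapply Nat.divide_trans; [apply divide_pow_self|]; eauto. }
  destruct (classic (Nat.divide q m)) as [Hqm|Hqm].
  - left. destruct (Hnd n) as [Hdn Hgn]; [eapply coprime_not_divide_both; eauto|].
    split; auto. split; [|apply Nat.divide_mul_l].
    intros Hd. apply (Nat.gauss _ n); [rewrite Nat.mul_comm|]; auto.
  - right. destruct (Hnd m Hqm) as [Hdm Hgm]. split; auto. split; [|apply Nat.divide_mul_r].
    intros Hd. apply (Nat.gauss _ m); auto.
Qed.

(* A convolution with a function supported on prime powers is a derivation: it splits
   over the two coprime factors of [m * n]. *)
Lemma dconv_mul_coprime c h m n : (forall d, c d <> 0 -> prime_power d) ->
  (1 <= m)%nat -> (1 <= n)%nat -> Nat.gcd m n = 1%nat ->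
  dconv c h (m * n) = dconv c (fun x => h (x * n)%nat) m + dconv c (fun x => h (m * x)%nat) n.
Proof.
  intros Hc Hm Hn Hg. unfold dconv.
  assert (Hsmall : forall x d, (1 <= x)%nat -> (x < d)%nat -> Nat.eqb (x mod d) 0 = false).
  { intros x d Hx Hd. apply eqb_mod_not_divide. intros Hdv. apply Nat.divide_pos_le in Hdv; lia. }
  rewrite <- (sumR_extend _ m (m * n)), <- (sumR_extend _ n (m * n)), <- sumR_plus
    by (nia || (intros d Hd; rewrite Hsmall by lia; rewrite andb_false_r; reflexivity)).
  apply sumR_ext. intros d _.
  destruct (Nat.leb_spec 1 d) as [Hd1|]; simpl; [|lra].
  destruct (Req_dec (c d) 0) as [Hz|Hz].
  { rewrite Hz. destruct (Nat.eqb _ 0), (Nat.eqb _ 0), (Nat.eqb _ 0); lra. }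
  destruct (prime_power_divide_coprime_mul d m n (Hc d Hz) Hg) as [[Hdn Hiff]|[Hdm Hiff]].
  - rewrite (eqb_mod_not_divide d n), Rplus_0_r by auto.
    destruct (classic (Nat.divide d m)) as [[q ->]|Hdm].
    + rewrite (proj2 (eqb_mod_divide d (q * d))) by (exists q; lia).
      rewrite (proj2 (eqb_mod_divide d (q * d * n))) by (exists (q * n)%nat; lia).
      rewrite Nat.div_mul, <- Nat.mul_assoc, (Nat.mul_comm d), Nat.mul_assoc, Nat.div_mul by lia.
      reflexivity.
    + rewrite !eqb_mod_not_divide by (rewrite ?Hiff; auto). reflexivity.
  - rewrite (eqb_mod_not_divide d m), Rplus_0_l by auto.
    destruct (classic (Nat.divide d n)) as [[q ->]|Hdn].
    + rewrite (proj2 (eqb_mod_divide d (q * d))) by (exists q; lia).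
      rewrite (proj2 (eqb_mod_divide d (m * (q * d)))) by (exists (m * q)%nat; lia).
      rewrite Nat.div_mul, Nat.mul_assoc, Nat.div_mul by lia. reflexivity.
    + rewrite !eqb_mod_not_divide by (rewrite ?Hiff; auto). reflexivity.
Qed.

Lemma cF_prime_pow X q e : nprime q -> (1 <= e)%nat ->
  cF X (q ^ e) = if Rle_dec (INR (q ^ e)) X then / INR e else 0.
Proof.
  intros Hq He. pose proof (nprime_ge2 _ Hq). unfold cF.
  replace (Nat.leb 1 (q ^ e)) with true by (symmetry; apply Nat.leb_le, pow_ge1; lia).
  destruct Rle_dec; auto. rewrite Lambda_prime_pow, pow_INR, ln_pow by (auto; apply lt_0_INR; lia).
  assert (0 < ln (INR q)) by (rewrite <- ln_1; apply ln_increasing; [lra|apply lt_1_INR; lia]).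
  assert (0 < INR e) by (apply lt_0_INR; lia). field. lra.
Qed.

Lemma cF_not_prime_pow X d : ~ prime_power d -> cF X d = 0.
Proof.
  intros H. unfold cF. rewrite Lambda_not_prime_pow; auto.
  destruct Nat.leb; [destruct Rle_dec|]; auto. unfold Rdiv; ring.
Qed.

Lemma cF_neq0 X d : cF X d <> 0 ->
  exists q e, nprime q /\ (1 <= e)%nat /\ d = (q ^ e)%nat /\ INR d <= X.
Proof.
  intros H. destruct (classic (prime_power d)) as [[q [e [Hq [He ->]]]]|Hn].
  - exists q, e. do 3 (split; auto). rewrite cF_prime_pow in H; auto. destruct Rle_dec; auto. lra.
  - contradict H. apply cF_not_prime_pow; auto.
Qed.

Lemma cF_support_prime_power X d : cF X d <> 0 -> prime_power d.
Proof. intros H. destruct (cF_neq0 X d H) as [q [e [? [? [? _]]]]]. exists q, e. auto. Qed.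

Lemma cF_ge0 X d : 0 <= cF X d.
Proof.
  destruct (classic (prime_power d)) as [[q [e [Hq [He ->]]]]|Hn].
  - rewrite cF_prime_pow; auto. destruct Rle_dec; [|lra].
    left. apply Rinv_0_lt_compat, lt_0_INR; lia.
  - rewrite cF_not_prime_pow; auto; lra.
Qed.

Lemma cF_gt X d : X < INR d -> cF X d = 0.
Proof. intros. unfold cF. destruct Nat.leb; [destruct Rle_dec|]; auto. lra. Qed.

Lemma cF_1 X : cF X 1 = 0.
Proof.
  apply cF_not_prime_pow. intros [q [e [Hq [He H]]]].
  pose proof (nprime_ge2 _ Hq). pose proof (pow_ge_base q e ltac:(lia) He). lia.
Qed.

Lemma aF_S X j n : aF X (S j) n = dconv (cF X) (aF X j) n.
Proof. reflexivity. Qed.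

Lemma aF_ge0 X j n : 0 <= aF X j n.
Proof.
  revert n; induction j as [|j IH]; intros n; simpl; [destruct Nat.eqb; lra|].
  apply sumR_ge0. intros d _. destruct (_ && _); [|lra]. apply Rmult_le_pos; auto. apply cF_ge0.
Qed.

Lemma aF_at_0 X j : aF X j 0 = 0.
Proof. destruct j; [reflexivity|]. simpl. rewrite sumR_O. reflexivity. Qed.

Definition smooth (X : R) (n : nat) : Prop := forall p, nprime p -> Nat.divide p n -> INR p <= X.

(* [F ^ j] is a sum over products of [j] prime powers [<= X]. *)
Lemma aF_support X j n : aF X j n <> 0 ->
  (1 <= n)%nat /\ (2 ^ j <= n)%nat /\ INR n <= X ^ j /\ (j <= Omega n)%nat /\ smooth X n.
Proof.
  revert n; induction j as [|j IH]; intros n H.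
  - simpl in H. destruct (Nat.eqb_spec n 1) as [E|]; [subst n|lra]. simpl. repeat split; try lia; try lra.
    intros p Hp Hd. apply Nat.divide_1_r in Hd. apply nprime_ge2 in Hp. lia.
  - apply dconv_neq0 in H as [d [Hd [Hn [Hc Ha]]]]. set (c := (n / d)%nat) in *.
    destruct (cF_neq0 X d Hc) as [q [e [Hq [He [Hde HdX]]]]].
    destruct (IH c Ha) as [H1 [H2 [H3 [H4 H5]]]].
    pose proof (nprime_ge2 _ Hq). pose proof (pow_ge_base q e ltac:(lia) He).
    rewrite Hn. repeat split.
    + nia.
    + rewrite Nat.pow_succ_r'. nia.
    + rewrite mult_INR. simpl. apply Rmult_le_compat; auto; apply pos_INR.
    + rewrite Omega_mul, Hde, Omega_prime_pow by (auto; lia). lia.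
    + intros p Hp Hpd. destruct (nprime_divide_mul _ _ _ Hp Hpd) as [Hp1|Hp1]; auto.
      subst d. assert (p = q) as -> by (eapply nprime_divide_prime_pow; eauto).
      eapply Rle_trans; [|apply HdX]. apply le_INR, pow_ge_base; lia.
Qed.

Lemma aF_vanish X j n : (1 <= n)%nat -> (n <= j)%nat -> aF X j n = 0.
Proof.
  intros. destruct (Req_dec (aF X j n) 0) as [|Hne]; auto.
  apply aF_support in Hne as [_ [Hn _]]. pose proof (Nat.pow_gt_lin_r 2 j ltac:(lia)). lia.
Qed.

Definition aFfact X j n := aF X j n / INR (fact j).

Lemma aFfact_S X j n : INR (S j) * aFfact X (S j) n = dconv (cF X) (aFfact X j) n.
Proof.
  unfold aFfact. rewrite aF_S, fact_simpl, mult_INR. unfold Rdiv at 2.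
  rewrite dconv_scale_r. pose proof (lt_O_fact j). field.
  split; apply not_0_INR; lia.
Qed.

Lemma aFfact_ge0 X j n : 0 <= aFfact X j n.
Proof.
  apply Rmult_le_pos; [apply aF_ge0|]. left. apply Rinv_0_lt_compat, lt_0_INR, lt_O_fact.
Qed.

Lemma aFfact_vanish X j n : (1 <= n)%nat -> (n <= j)%nat -> aFfact X j n = 0.
Proof. intros. unfold aFfact. rewrite aF_vanish; auto. unfold Rdiv; ring. Qed.

Lemma aFfact_neq0 X j n : aFfact X j n <> 0 -> aF X j n <> 0.
Proof. unfold aFfact. intros H E. rewrite E in H. apply H. unfold Rdiv. ring. Qed.

(* The Leibniz rule [(x (f g))' = x f' g + f x g'] on the coefficients of power series. *)
Lemma sumR_leibniz (a b : nat -> R) j :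
  sumR (fun i => INR (S i) * a (S i) * b (j - i)%nat) j +
  sumR (fun i => a i * (INR (S j - i) * b (S j - i)%nat)) j =
  INR (S j) * sumR (fun i => a i * b (S j - i)%nat) (S j).
Proof.
  rewrite <- sumR_mult_l.
  rewrite (sumR_ext (fun i => INR (S j) * (a i * b (S j - i)%nat))
    (fun i => INR i * a i * b (S j - i)%nat + a i * (INR (S j - i) * b (S j - i)%nat))).
  2:{ intros i Hi. replace (INR (S j)) with (INR i + INR (S j - i)) by (rewrite <- plus_INR; f_equal; lia).
      ring. }
  rewrite sumR_plus, sumR_shift, (sumR_S (fun i => a i * _)), Nat.sub_diag. simpl (INR 0).
  change (fun i => INR (S i) * a (S i) * b (S j - S i)%nat)
    with (fun i => INR (S i) * a (S i) * b (j - i)%nat).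
  ring.
Qed.

(* The coefficients of [F ^ j / j!] are those of [exp F], which turns the additive
   (over coprime factors) [F] into a multiplicative function. *)
Lemma aFfact_mul_coprime X j : forall m n, (1 <= m)%nat -> (1 <= n)%nat -> Nat.gcd m n = 1%nat ->
  aFfact X j (m * n) = sumR (fun i => aFfact X i m * aFfact X (j - i) n) j.
Proof.
  induction j as [|j IH]; intros m n Hm Hn Hg.
  - rewrite sumR_O. unfold aFfact. simpl. unfold Rdiv. rewrite Rinv_1.
    destruct (Nat.eqb_spec (m * n) 1), (Nat.eqb_spec m 1), (Nat.eqb_spec n 1); nia || lra.
  - apply (Rmult_eq_reg_l (INR (S j))); [|apply not_0_INR; lia].
    rewrite aFfact_S, dconv_mul_coprime by (auto; apply cF_support_prime_power).
    rewrite <- (sumR_leibniz (fun i => aFfact X i m) (fun i => aFfact X i n)). f_equal.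
    + rewrite (dconv_ext _ _ (fun x => sumR (fun i => aFfact X i x * aFfact X (j - i) n) j)).
      * rewrite dconv_sumR. apply sumR_ext. intros i _.
        rewrite dconv_scale_r, <- aFfact_S. reflexivity.
      * intros d Hd [q Hq]. rewrite Hq, Nat.div_mul by lia. apply IH; [nia|auto|].
        apply (coprime_divide_l m n q); auto. exists d. lia.
    + rewrite (dconv_ext _ _ (fun x => sumR (fun i => aFfact X i m * aFfact X (j - i) x) j)).
      * rewrite dconv_sumR. apply sumR_ext. intros i Hi.
        rewrite dconv_scale_l, <- aFfact_S. replace (S j - i)%nat with (S (j - i)) by lia. reflexivity.
      * intros d Hd [q Hq]. rewrite Hq, Nat.div_mul by lia. apply IH; [auto|nia|].
        rewrite Nat.gcd_comm. apply (coprime_divide_l n m q); [rewrite Nat.gcd_comm; auto|].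
        exists d. lia.
Qed.

Definition beta X k n := sumR (fun j => k ^ j * aFfact X j n) n.

Lemma beta_1 X k : beta X k 1 = 1.
Proof.
  unfold beta. rewrite sumR_S, sumR_O, (aFfact_vanish X 1 1) by lia.
  unfold aFfact. simpl. field.
Qed.

Lemma beta_sumR X k n N : (1 <= n)%nat -> (n <= N + 1)%nat ->
  beta X k n = sumR (fun j => k ^ j * aFfact X j n) N.
Proof.
  intros. unfold beta. apply (sumR_support _ _ _ (n - 1)); try lia.
  intros i Hi. rewrite aFfact_vanish by lia. ring.
Qed.

Lemma beta_mul_coprime X k m n : (1 <= m)%nat -> (1 <= n)%nat -> Nat.gcd m n = 1%nat ->
  beta X k (m * n) = beta X k m * beta X k n.
Proof.
  intros Hm Hn Hg. unfold beta at 1.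
  rewrite (sumR_ext _ (fun j => sumR (fun i => (k ^ i * aFfact X i m) * (k ^ (j - i) * aFfact X (j - i) n)) j)).
  2:{ intros j Hj. rewrite aFfact_mul_coprime, <- sumR_mult_l by auto. apply sumR_ext. intros i Hi.
      replace j with (i + (j - i))%nat at 1 by lia. rewrite pow_add. ring. }
  rewrite (sumR_triangle (fun i l => (k ^ i * aFfact X i m) * (k ^ l * aFfact X l n))).
  rewrite (sumR_ext _ (fun i => (k ^ i * aFfact X i m) * beta X k n)).
  2:{ intros i Hi. rewrite sumR_mult_l. destruct (le_lt_dec m i).
      - rewrite aFfact_vanish by lia. ring.
      - rewrite (beta_sumR X k n (m * n - i)) by nia. reflexivity. }
  rewrite sumR_mult_r, (beta_sumR X k m (m * n)) by nia. reflexivity.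
Qed.

Lemma beta_multiplicative X k : multiplicative (beta X k).
Proof. split; [apply beta_1|intros; apply beta_mul_coprime; auto]. Qed.

(** * Prime powers and the series [(1 - x)^(-k)] *)

Definition aconv (u v : nat -> R) (a : nat) : R :=
  sumR (fun m => if Nat.leb 1 m then u m * v (a - m)%nat else 0) a.

(* [cpow w j a] is the coefficient of [x ^ a] in [(sum_(m >= 1) w m x ^ m) ^ j]. *)
Fixpoint cpow (w : nat -> R) (j a : nat) : R :=
  match j with
  | O => if Nat.eqb a 0 then 1 else 0
  | S j' => aconv w (cpow w j') a
  end.

Definition ones (m : nat) : R := 1.

Definition inv_nat (m : nat) : R := / INR m.

Lemma aconv_ext u v v' a : (forall x, v x = v' x) -> aconv u v a = aconv u v' a.
Proof. intros H. apply sumR_ext. intros m _. rewrite H. reflexivity. Qed.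

Lemma aconv_scale_l u v r a : aconv u (fun x => r * v x) a = r * aconv u v a.
Proof. unfold aconv. rewrite <- sumR_mult_l. apply sumR_ext. intros m _. destruct Nat.leb; ring. Qed.

Lemma aconv_scale_r u v r a : aconv u (fun x => v x * r) a = aconv u v a * r.
Proof. unfold aconv. rewrite <- sumR_mult_r. apply sumR_ext. intros m _. destruct Nat.leb; ring. Qed.

Lemma aconv_sumR u (f : nat -> nat -> R) N a :
  aconv u (fun x => sumR (fun i => f i x) N) a = sumR (fun i => aconv u (f i) a) N.
Proof.
  unfold aconv. rewrite sumR_switch. apply sumR_ext. intros m _.
  destruct Nat.leb; [symmetry; apply sumR_mult_l|symmetry; apply sumR_eq0; reflexivity].
Qed.

Lemma aconv_delta u a : aconv u (cpow u 0) a = if Nat.leb 1 a then u a else 0.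
Proof.
  unfold aconv. destruct (Nat.leb_spec 1 a).
  - rewrite (sumR_single _ _ a) by (auto; intros i Hi Hne; cbn [cpow];
      destruct (Nat.leb 1 i), (Nat.eqb_spec (a - i) 0); lia || ring).
    rewrite Nat.sub_diag. destruct (Nat.leb_spec 1 a); [simpl; ring|lia].
  - replace a with 0%nat by lia. rewrite sumR_O. reflexivity.
Qed.

Lemma aconv_double u v h a : aconv u (aconv v h) a =
  sumR (fun m => sumR (fun m' => if Nat.leb 1 m && Nat.leb 1 m' && Nat.leb (m + m') a
                                then u m * v m' * h (a - m - m')%nat else 0) a) a.
Proof.
  apply sumR_ext. intros m Hm. destruct (Nat.leb_spec 1 m); cbn [andb].
  - unfold aconv. rewrite <- sumR_mult_l.
    rewrite (sumR_extend _ (a - m) a) by (try lia; intros i Hi;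
      destruct (Nat.leb 1 i), (Nat.leb_spec (m + i) a); cbn [andb]; lia || ring).
    apply sumR_ext. intros m' Hm'.
    destruct (Nat.leb 1 m'), (Nat.leb_spec (m + m') a); cbn [andb]; lia || ring.
  - symmetry. apply sumR_eq0. reflexivity.
Qed.

Lemma aconv_swap u v h a : aconv u (aconv v h) a = aconv v (aconv u h) a.
Proof.
  rewrite !aconv_double, sumR_switch. apply sumR_ext. intros m' _. apply sumR_ext. intros m _.
  rewrite (Nat.add_comm m), (andb_comm (Nat.leb 1 m)).
  replace (a - m - m')%nat with (a - m' - m)%nat by lia. destruct (_ && _); ring.
Qed.

Lemma aconv_ones_S f a : aconv ones f (S a) = sumR f a.
Proof.
  unfold aconv, ones. rewrite sumR_shift. simpl (Nat.leb 1 0). rewrite Rplus_0_l.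
  rewrite (sumR_reindex f (fun i => a - i)%nat a a) by
    (intros; lia || (exists (a - d)%nat; split; lia)).
  apply sumR_ext. intros i _. simpl. ring.
Qed.

(* The Euler operator [x d/dx] applied to a product, with [x d/dx] of [sum_m w m x ^ m]
   equal to [sum_m x ^ m] for [w = inv_nat]. *)
Lemma euler_aconv_inv h a :
  INR a * aconv inv_nat h a = aconv ones h a + aconv inv_nat (fun x => INR x * h x) a.
Proof.
  unfold aconv. rewrite <- sumR_mult_l, <- sumR_plus. apply sumR_ext. intros m Hm.
  destruct (Nat.leb_spec 1 m); [|ring].
  replace (INR a) with (INR m + INR (a - m)) by (rewrite <- plus_INR; f_equal; lia).
  unfold inv_nat, ones. field. apply not_0_INR. lia.
Qed.

Lemma cpow_ge0 w j a : (forall m, (1 <= m)%nat -> 0 <= w m) -> 0 <= cpow w j a.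
Proof.
  intros Hw. revert a; induction j as [|j IH]; intros a; cbn [cpow]; [destruct Nat.eqb; lra|].
  apply sumR_ge0. intros m _. destruct (Nat.leb_spec 1 m); [apply Rmult_le_pos; auto|lra].
Qed.

Lemma cpow_le w w' j a : (forall m, (1 <= m)%nat -> 0 <= w m <= w' m) -> cpow w j a <= cpow w' j a.
Proof.
  intros Hw. revert a; induction j as [|j IH]; intros a; cbn [cpow]; [lra|].
  apply sumR_le. intros m _. destruct (Nat.leb_spec 1 m); [|lra].
  apply Rmult_le_compat; try apply Hw; auto. apply cpow_ge0. intros; apply Hw; auto.
Qed.

Lemma cpow_ext w w' a0 : (forall m, (1 <= m <= a0)%nat -> w m = w' m) ->
  forall j a, (a <= a0)%nat -> cpow w j a = cpow w' j a.
Proof.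
  intros Hw j. induction j as [|j IH]; intros a Ha; cbn [cpow]; auto.
  apply sumR_ext. intros m Hm. destruct (Nat.leb_spec 1 m); auto. rewrite Hw, IH by lia. reflexivity.
Qed.

Lemma cpow_vanish w j a : (a < j)%nat -> cpow w j a = 0.
Proof.
  revert a; induction j as [|j IH]; intros a Ha; cbn [cpow]; [lia|].
  apply sumR_eq0. intros m Hm. destruct (Nat.leb_spec 1 m); auto. rewrite IH by lia. ring.
Qed.

(* With [L = -log (1 - x)], this is [x (L ^ (j + 1))' = (j + 1) L ^ j x L'], [x L' = x / (1 - x)]. *)
Lemma cpow_inv_euler j a : INR a * cpow inv_nat (S j) a = INR (S j) * aconv ones (cpow inv_nat j) a.
Proof.
  revert a. induction j as [|j IH]; intros a.
  - cbn [cpow]. rewrite !aconv_delta, INR_1. destruct (Nat.leb_spec 1 a); [|ring].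
    unfold inv_nat, ones. field. apply not_0_INR. lia.
  - change (cpow inv_nat (S (S j)) a) with (aconv inv_nat (cpow inv_nat (S j)) a).
    rewrite euler_aconv_inv, (aconv_ext _ _ _ _ IH), aconv_scale_l, aconv_swap, (S_INR (S j)).
    change (cpow inv_nat (S j)) with (aconv inv_nat (cpow inv_nat j)). ring.
Qed.

Definition expL (k : R) (N a : nat) : R :=
  sumR (fun j => k ^ j * (cpow inv_nat j a / INR (fact j))) N.

Lemma expL_S k N a : (a <= N)%nat -> expL k (S N) a = expL k N a.
Proof. intros. unfold expL. rewrite sumR_S, cpow_vanish by lia. unfold Rdiv. ring. Qed.

Lemma expL_recurrence k N a : (a <= N)%nat -> INR a * expL k N a = k * aconv ones (expL k N) a.
Proof.
  intros Ha. rewrite <- expL_S by auto. unfold expL.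
  rewrite aconv_sumR, sumR_shift, Rmult_plus_distr_l, <- !sumR_mult_l.
  replace (INR a * (k ^ 0 * (cpow inv_nat 0 a / INR (fact 0)))) with 0
    by (simpl; destruct (Nat.eqb_spec a 0) as [->|]; simpl; field).
  rewrite Rplus_0_l. apply sumR_ext. intros j _.
  rewrite (aconv_scale_l ones (fun x => cpow inv_nat j x / INR (fact j))). unfold Rdiv.
  rewrite (aconv_scale_r ones (cpow inv_nat j)).
  replace (aconv ones (cpow inv_nat j) a) with (INR a * cpow inv_nat (S j) a / INR (S j))
    by (rewrite cpow_inv_euler; field; apply not_0_INR; lia).
  rewrite fact_simpl, mult_INR. simpl pow.
  pose proof (lt_O_fact j). field. split; apply not_0_INR; lia.
Qed.

Lemma negbinom_recurrence k a : INR a * negbinom k a = k * aconv ones (negbinom k) a.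
Proof.
  induction a as [|a IH]; [unfold aconv; rewrite sumR_O; simpl; ring|].
  rewrite aconv_ones_S. destruct a as [|a]; [rewrite sumR_O; unfold negbinom; simpl; field|].
  rewrite sumR_S, Rmult_plus_distr_l, <- aconv_ones_S, <- IH. unfold negbinom. cbn [rising]. rewrite fact_simpl, mult_INR, S_INR.
  pose proof (lt_O_fact (S a)). pose proof (pos_INR (S a)).
  field. split; [apply not_0_INR; lia|lra].
Qed.

Lemma recurrence_unique k f g N : f 0%nat = g 0%nat ->
  (forall a, (a <= N)%nat -> INR a * f a = k * aconv ones f a) ->
  (forall a, (a <= N)%nat -> INR a * g a = k * aconv ones g a) ->
  forall a, (a <= N)%nat -> f a = g a.
Proof.
  intros H0 Hf Hg a. induction a as [a IH] using (well_founded_induction lt_wf). intros Ha.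
  destruct a as [|a]; auto.
  apply (Rmult_eq_reg_l (INR (S a))); [|apply not_0_INR; lia].
  rewrite Hf, Hg, !aconv_ones_S by lia. f_equal. apply sumR_ext. intros i Hi. apply IH; lia.
Qed.

Lemma expL_negbinom k N a : (a <= N)%nat -> expL k N a = negbinom k a.
Proof.
  apply (recurrence_unique k); [|intros; apply expL_recurrence; auto|intros; apply negbinom_recurrence].
  unfold expL. rewrite (sumR_single _ _ 0) by
    (lia || (intros i _ Hi; rewrite cpow_vanish by lia; unfold Rdiv; ring)).
  unfold negbinom. simpl. field.
Qed.

Lemma aF_prime_pow X p j a : nprime p -> aF X j (p ^ a) = cpow (fun m => cF X (p ^ m)) j a.
Proof.
  intros Hp. pose proof (nprime_ge2 _ Hp). revert a. induction j as [|j IH]; intros a.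
  - cbn [aF cpow]. destruct (Nat.eqb_spec (p ^ a) 1), (Nat.eqb_spec a 0); subst; simpl in *; auto; try lia.
    pose proof (pow_ge_base p a ltac:(lia) ltac:(lia)). lia.
  - rewrite aF_S. unfold dconv. cbn [cpow]. unfold aconv.
    rewrite (sumR_reindex _ (fun m => p ^ m)%nat (p ^ a) a).
    + apply sumR_ext. intros m Hm.
      replace (p ^ a)%nat with (p ^ (a - m) * p ^ m)%nat by (rewrite <- Nat.pow_add_r; f_equal; lia).
      rewrite (proj2 (eqb_mod_divide _ _)) by (exists (p ^ (a - m))%nat; reflexivity).
      replace (Nat.leb 1 (p ^ m)) with true by (symmetry; apply Nat.leb_le, pow_ge1; lia).
      destruct (Nat.leb_spec 1 m); cbn [andb].
      * rewrite Nat.div_mul, IH by (pose proof (pow_ge1 p m); lia). reflexivity.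
      * replace m with 0%nat by lia. rewrite cF_1. ring.
    + intros. apply Nat.pow_le_mono_r; lia.
    + intros m1 m2 _ _ E. apply Nat.pow_inj_r in E; lia.
    + intros d Hd Hnz. destruct (Nat.leb 1 d && Nat.eqb (p ^ a mod d) 0) eqn:E; [|lra].
      apply andb_prop in E as [E1 E2]. apply Nat.leb_le in E1. apply eqb_mod_divide in E2.
      assert (Hc : cF X d <> 0) by (intro Hc; rewrite Hc in Hnz; lra).
      destruct (cF_neq0 X d Hc) as [q [e [Hq [He [-> _]]]]].
      assert (q = p) as ->.
      { eapply nprime_divide_prime_pow; eauto. eapply Nat.divide_trans; [apply divide_pow_self|]; eauto. }
      exists e. split; auto. rewrite <- (Nat.mul_1_r (p ^ a)) in E2.
      apply prime_pow_divide_iff in E2; auto. intros Hd1. apply Nat.divide_1_r in Hd1. lia.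
Qed.

Lemma cF_prime_pow_bound X p m : nprime p -> (1 <= m)%nat -> 0 <= cF X (p ^ m) <= inv_nat m.
Proof.
  intros. rewrite cF_prime_pow; auto. unfold inv_nat.
  assert (0 < / INR m) by (apply Rinv_0_lt_compat, lt_0_INR; lia). destruct Rle_dec; lra.
Qed.

Lemma beta_prime_pow X k p a : nprime p ->
  beta X k (p ^ a) = sumR (fun j => k ^ j * (cpow (fun m => cF X (p ^ m)) j a / INR (fact j))) (p ^ a).
Proof. intros. unfold beta, aFfact. apply sumR_ext. intros. rewrite aF_prime_pow; auto. Qed.

Lemma beta_prime_pow_small X k p a : nprime p -> INR (p ^ a) <= X -> beta X k (p ^ a) = negbinom k a.
Proof.
  intros Hp HX. pose proof (nprime_ge2 _ Hp).
  rewrite beta_prime_pow, <- (expL_negbinom k (p ^ a) a) by (auto; pose proof (Nat.pow_gt_lin_r p a); lia).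
  apply sumR_ext. intros j _. do 2 f_equal. apply (cpow_ext _ _ a); auto.
  intros m Hm. rewrite cF_prime_pow by (auto; lia). unfold inv_nat. destruct Rle_dec as [|Hn]; auto.
  contradict Hn. eapply Rle_trans; [|apply HX]. apply le_INR, Nat.pow_le_mono_r; lia.
Qed.

Lemma beta_prime_pow_abs X k p a : nprime p -> Rabs (beta X k (p ^ a)) <= negbinom (Rabs k) a.
Proof.
  intros Hp. pose proof (nprime_ge2 _ Hp).
  rewrite beta_prime_pow, <- (expL_negbinom (Rabs k) (p ^ a) a) by (auto; pose proof (Nat.pow_gt_lin_r p a); lia).
  eapply Rle_trans; [apply Rabs_sumR|]. apply sumR_le. intros j _.
  assert (0 < / INR (fact j)) by apply Rinv_0_lt_compat, lt_0_INR, lt_O_fact.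
  rewrite Rabs_mult, <- RPow_abs. apply Rmult_le_compat_l; [apply pow_le, Rabs_pos|].
  rewrite Rabs_right by (apply Rle_ge, Rmult_le_pos; [apply cpow_ge0; intros; apply cF_prime_pow_bound; auto|lra]).
  apply Rmult_le_compat_r; [lra|]. apply cpow_le. intros; apply cF_prime_pow_bound; auto.
Qed.

Lemma beta_eq_dk X k n : (1 <= n)%nat ->
  (forall p m : nat, prime (Z.of_nat p) -> (1 <= m)%nat -> Nat.divide (p ^ m) n -> INR (p ^ m) <= X) ->
  beta X k n = dk k n.
Proof.
  intros Hn. revert n Hn. apply (coprime_factor_ind (fun n => _ -> beta X k n = dk k n)).
  - intros. rewrite beta_1, dk_1. reflexivity.
  - intros p a m Hp Ha Hpm Hm IH Hsmall. pose proof (pow_ge1 p a ltac:(apply nprime_ge2 in Hp; lia)).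
    rewrite beta_mul_coprime, dk_mul_coprime, IH, beta_prime_pow_small, dk_prime_pow;
      auto using coprime_prime_pow.
    + apply Hsmall; auto. exists m. lia.
    + intros q e Hq He Hd. apply Hsmall; auto. eapply Nat.divide_trans; [apply Hd|]. exists (p ^ a)%nat. lia.
Qed.

Lemma beta_abs_le_dk X k n : (1 <= n)%nat -> Rabs (beta X k n) <= dk (Rabs k) n.
Proof.
  revert n. apply coprime_factor_ind.
  - rewrite beta_1, dk_1, Rabs_R1. lra.
  - intros p a m Hp Ha Hpm Hm IH. pose proof (pow_ge1 p a ltac:(apply nprime_ge2 in Hp; lia)).
    rewrite beta_mul_coprime, dk_mul_coprime, Rabs_mult, dk_prime_pow; auto using coprime_prime_pow.
    apply Rmult_le_compat; try apply Rabs_pos; auto. apply beta_prime_pow_abs; auto.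
Qed.

(** * The truncated coefficients [alpha_k] *)

Lemma lt_up_of_le W x : INR x <= W -> (x < Z.to_nat (up W))%nat.
Proof.
  intros H. destruct (archimed W) as [H1 _]. rewrite INR_IZR_INZ in H.
  assert (Z.of_nat x < up W)%Z by (apply lt_IZR; lra). lia.
Qed.

Lemma pow_le_Rpower X j W : 1 <= X -> INR j <= W -> X ^ j <= Rpower X W.
Proof. intros. rewrite <- Rpower_pow by lra. apply Rle_Rpower; auto. Qed.

Lemma alpha_eq X T k n : alpha X T k n =
  sumR (fun j => if Rle_dec (INR j) (W0 k T) then k ^ j * aFfact X j n else 0) (Z.to_nat (up (W0 k T))).
Proof. apply sumR_ext. intros j _. destruct Rle_dec; auto. unfold aFfact, Rdiv. ring. Qed.

Lemma alpha_support X T k n : 1 <= X -> alpha X T k n <> 0 -> INR n <= Rpower X (W0 k T).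
Proof.
  intros HX H. rewrite alpha_eq in H. apply sumR_neq0 in H as [j [_ H]].
  destruct Rle_dec as [Hj|]; [|lra].
  assert (Ha : aF X j n <> 0) by (apply aFfact_neq0; intros E; rewrite E in H; lra).
  apply aF_support in Ha as [_ [_ [Hn _]]].
  eapply Rle_trans; [apply Hn|]. apply pow_le_Rpower; auto.
Qed.

Lemma alpha_abs_le X T k n : (1 <= n)%nat -> Rabs (alpha X T k n) <= dk (Rabs k) n.
Proof.
  intros Hn. set (U := Z.to_nat (up (W0 k T))).
  assert (Hterm : forall j, 0 <= Rabs k ^ j * aFfact X j n)
    by (intros; apply Rmult_le_pos; [apply pow_le, Rabs_pos|apply aFfact_ge0]).
  rewrite alpha_eq. eapply Rle_trans; [apply Rabs_sumR|].
  eapply Rle_trans; [apply (sumR_le _ (fun j => Rabs k ^ j * aFfact X j n))|].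
  { intros j _. destruct Rle_dec; [|rewrite Rabs_R0; auto].
    rewrite Rabs_mult, <- RPow_abs, (Rabs_right (aFfact X j n)) by apply Rle_ge, aFfact_ge0. lra. }
  eapply Rle_trans; [apply (sumR_le_upper _ _ (Nat.max U n)); auto; lia|].
  rewrite <- (beta_sumR X (Rabs k) n) by lia.
  pose proof (beta_abs_le_dk X (Rabs k) n Hn) as Hb. rewrite Rabs_Rabsolu in Hb.
  eapply Rle_trans; [apply Rle_abs|exact Hb].
Qed.

Lemma alpha_eq_beta X T k n : (1 <= n)%nat -> INR (Omega n) <= W0 k T -> alpha X T k n = beta X k n.
Proof.
  intros Hn HO. pose proof (lt_up_of_le _ _ HO) as HU.
  assert (Hsupp : forall j, aFfact X j n <> 0 -> (j <= Omega n /\ j < n)%nat).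
  { intros j Hj. split.
    - apply aFfact_neq0, aF_support in Hj. tauto.
    - destruct (le_lt_dec n j); auto. contradict Hj. apply aFfact_vanish; auto. }
  rewrite alpha_eq. unfold beta.
  rewrite (sumR_ext _ (fun j => k ^ j * aFfact X j n)).
  2:{ intros j _. destruct Rle_dec as [|Hr]; auto.
      destruct (Req_dec (aFfact X j n) 0) as [E|E]; [rewrite E; ring|].
      contradict Hr. eapply Rle_trans; [|apply HO]. apply le_INR, Hsupp, E. }
  apply (sumR_support _ _ _ (Nat.min (Omega n) (n - 1))); try lia.
  intros j Hj. destruct (Req_dec (aFfact X j n) 0) as [E|E]; [rewrite E; ring|].
  apply Hsupp in E. lia.
Qed.

Lemma Cexp_add a b : Cexp (Cplus a b) = Cmult (Cexp a) (Cexp b).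
Proof.
  destruct a as [a1 a2], b as [b1 b2]. unfold Cexp, Cplus, Cmult. simpl.
  rewrite exp_plus, cos_plus, sin_plus. f_equal; ring.
Qed.

Lemma Cexp_0 : Cexp (RtoC 0) = RtoC 1.
Proof. unfold Cexp. simpl. rewrite exp_0, cos_0, sin_0. unfold RtoC. f_equal; ring. Qed.

Lemma npow_neg_mul d m s : (1 <= d)%nat -> (1 <= m)%nat ->
  npow_neg (d * m) s = Cmult (npow_neg d s) (npow_neg m s).
Proof.
  intros. unfold npow_neg. rewrite <- Cexp_add. f_equal.
  rewrite mult_INR, ln_mult, RtoC_plus by (apply lt_0_INR; lia). ring.
Qed.

Lemma npow_neg_1 s : npow_neg 1 s = RtoC 1.
Proof. unfold npow_neg. simpl. rewrite ln_1, <- Cexp_0. f_equal. ring. Qed.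

Definition dirichlet (s : C) (f : nat -> R) (N : nat) : C :=
  sumC (fun n => Cmult (RtoC (f n)) (npow_neg n s)) N.

Lemma dirichlet_support s f K N1 N2 : (K <= N1)%nat -> (K <= N2)%nat ->
  (forall n, (K < n)%nat -> f n = 0) -> dirichlet s f N1 = dirichlet s f N2.
Proof. intros. apply (sumC_support _ _ _ K); auto. intros. rewrite H1 by auto. ring. Qed.

Lemma dirichlet_mul s c a M1 M2 N : c 0%nat = 0 -> a 0%nat = 0 ->
  (forall d, (M1 < d)%nat -> c d = 0) -> (forall m, (M2 < m)%nat -> a m = 0) ->
  (M1 <= N)%nat -> (M1 * M2 <= N)%nat ->
  Cmult (dirichlet s c M1) (dirichlet s a M2) = dirichlet s (dconv c a) N.
Proof.
  intros c0 a0 Hc Ha H1 H2. unfold dirichlet, dconv.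
  set (t d n := Cmult (RtoC (if Nat.leb 1 d && Nat.eqb (n mod d) 0 then c d * a (n / d)%nat else 0))
                      (npow_neg n s)).
  assert (Hrow : forall d, (d <= M1)%nat ->
    Cmult (Cmult (RtoC (c d)) (npow_neg d s)) (sumC (fun m => Cmult (RtoC (a m)) (npow_neg m s)) M2) =
    sumC (t d) N).
  { intros d Hd. rewrite <- sumC_mult_l. destruct (Nat.eq_dec d 0) as [->|Hd0].
    - transitivity (RtoC 0); [apply sumC_eq0|symmetry; apply sumC_eq0];
        intros n _; unfold t; rewrite ?c0; simpl; ring.
    - rewrite (sumC_reindex (t d) (fun m => d * m)%nat N M2); [|nia|nia|].
      + apply sumC_ext. intros m Hm. unfold t.
        replace (Nat.leb 1 d) with true by (symmetry; apply Nat.leb_le; lia).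
        rewrite (proj2 (eqb_mod_divide _ _)), Nat.mul_comm, Nat.div_mul by (lia || (exists m; lia)).
        cbn [andb]. rewrite RtoC_mult.
        destruct (Nat.eq_dec m 0) as [->|Hm0]; [rewrite a0; ring|].
        rewrite npow_neg_mul by lia. ring.
      + intros n Hn. unfold t.
        destruct (Nat.leb 1 d && Nat.eqb (n mod d) 0) eqn:E; intros Hnz; [|contradict Hnz; ring].
        apply andb_prop in E as [_ E2]. apply eqb_mod_divide in E2 as [q ->].
        exists q. rewrite Nat.div_mul in Hnz by lia. split; [|lia].
        destruct (le_lt_dec q M2); auto. rewrite Ha, Rmult_0_r in Hnz by lia. contradict Hnz. ring. }
  rewrite <- sumC_mult_r, (sumC_ext _ (fun d => sumC (t d) N)) by auto.
  rewrite <- (sumC_extend (fun d => sumC (t d) N) M1 N) by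
    (auto; intros d Hd; apply sumC_eq0; intros n _; unfold t; rewrite Hc by lia;
     destruct (_ && _); rewrite ?Rmult_0_l; ring).
  rewrite sumC_switch. apply sumC_ext. intros n Hn. rewrite RtoC_sumR, <- sumC_mult_r.
  apply sumC_extend; auto. intros d Hd. unfold t.
  destruct (Nat.eq_dec n 0) as [->|]; [rewrite Nat.Div0.div_0_l, a0, Rmult_0_r; destruct (_ && _); ring|].
  rewrite eqb_mod_not_divide, andb_false_r; [ring|]. intros Hdv. apply Nat.divide_pos_le in Hdv; lia.
Qed.

Lemma cF_beyond_up X d : (Z.to_nat (up X) < d)%nat -> cF X d = 0.
Proof.
  intros H. apply cF_gt. destruct (archimed X) as [H1 _]. destruct (Rle_dec 0 X).
  - assert (IZR (up X) <= INR d) by (rewrite INR_IZR_INZ; apply IZR_le; lia). lra.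
  - pose proof (pos_INR d). lra.
Qed.

Lemma F_dirichlet X t : F X t = dirichlet (half_it t) (cF X) (Z.to_nat (up X)).
Proof.
  unfold F, dirichlet. apply sumC_ext. intros n _. unfold cF.
  destruct (Nat.leb 1 n); [destruct Rle_dec|]; auto; ring.
Qed.

Lemma le_INR_up x : x <= INR (Z.to_nat (up x)).
Proof.
  destruct (archimed x) as [H _]. destruct (Z_lt_le_dec (up x) 0).
  - replace (Z.to_nat (up x)) with 0%nat by lia. apply IZR_lt in l. simpl in *. lra.
  - rewrite INR_IZR_INZ, Z2Nat.id by lia. lra.
Qed.

Lemma aF_beyond X j N n : X ^ j <= INR N -> (N < n)%nat -> aF X j n = 0.
Proof.
  intros HN Hn. destruct (Req_dec (aF X j n) 0) as [|H]; auto.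
  apply aF_support in H as [_ [_ [H _]]]. apply lt_INR in Hn. lra.
Qed.

Lemma F_pow_dirichlet X t j N : X ^ j <= INR N ->
  pow_n (F X t) j = dirichlet (half_it t) (aF X j) N.
Proof.
  revert N. induction j as [|j IH]; intros N HN.
  - simpl pow_n. unfold dirichlet. rewrite (sumC_support _ _ 1 1%nat); [| |lia|].
    + rewrite sumC_S, sumC_O, npow_neg_1. simpl. change (@one C_Ring) with (RtoC 1). ring.
    + destruct N; [simpl in HN; lra|lia].
    + intros n Hn. simpl. destruct (Nat.eqb_spec n 1); [lia|ring].
  - set (M := Z.to_nat (up (X ^ j))).
    change (pow_n (F X t) (S j)) with (Cmult (F X t) (pow_n (F X t) j)).
    rewrite (IH M), F_dirichlet by apply le_INR_up.
    rewrite (dirichlet_mul _ _ _ _ _ (Nat.max N (Z.to_nat (up X) * M + Z.to_nat (up X))));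
      auto using cF_beyond_up, aF_at_0; try lia.
    + apply (dirichlet_support _ _ N); [lia|lia|]. intros n Hn. apply (aF_beyond X (S j) N); auto.
    + intros m Hm. apply (aF_beyond X j M); auto. apply le_INR_up.
Qed.

Lemma smoothb_true X n : smooth X n -> smoothb X n = true.
Proof.
  intros H. unfold smoothb. apply (proj2 (forallb_forall _ _)). intros p _.
  destruct (primeb p && Nat.eqb (n mod p) 0) eqn:E; auto.
  apply andb_prop in E as [E1 E2]. apply primeb_true_iff in E1. apply eqb_mod_divide in E2.
  destruct Rle_dec as [|Hn]; [reflexivity|]. contradict Hn. apply H; auto.
Qed.

Lemma Dtk_dirichlet X T k t : 1 <= X ->
  Dtk X T k t = sumC (fun n => if Nat.leb 1 n && smoothb X n
                       then Cmult (RtoC (alpha X T k n)) (npow_neg n (half_it t))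
                       else RtoC 0) (Z.to_nat (up (Rpower X (W0 k T)))).
Proof.
  intros HX. set (N := Z.to_nat (up (Rpower X (W0 k T)))). unfold Dtk.
  rewrite (sumC_ext _ (fun j => dirichlet (half_it t)
    (fun n => if Rle_dec (INR j) (W0 k T) then k ^ j / INR (fact j) * aF X j n else 0) N)).
  2:{ intros j _. unfold dirichlet. destruct Rle_dec as [Hj|Hj].
      - rewrite (F_pow_dirichlet X t j N). unfold dirichlet. rewrite <- sumC_mult_l.
        + apply sumC_ext. intros n _. rewrite RtoC_mult. ring.
        + eapply Rle_trans; [apply pow_le_Rpower; eauto|apply le_INR_up].
      - symmetry. apply sumC_eq0. intros. ring. }
  unfold dirichlet. rewrite sumC_switch. apply sumC_ext. intros n _.
  rewrite sumC_mult_r, <- RtoC_sumR. fold (alpha X T k n).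
  destruct (Req_dec (alpha X T k n) 0) as [E|E]; [rewrite E; destruct (_ && _); ring|].
  rewrite alpha_eq in E. apply sumR_neq0 in E as [j [_ Ej]].
  destruct Rle_dec; [|lra].
  assert (Hj : aF X j n <> 0) by (apply aFfact_neq0; intros Z; rewrite Z in Ej; lra).
  apply aF_support in Hj as [Hn [_ [_ [_ Hs]]]].
  replace (Nat.leb 1 n) with true by (symmetry; apply Nat.leb_le; auto).
  rewrite smoothb_true; auto.
Qed.

(** * The truncated exponential series *)

Lemma exp_le_exp x y : x <= y -> exp x <= exp y.
Proof. intros [H|H]; [left; apply exp_increasing; auto|subst; lra]. Qed.

Lemma Cmod_Cexp y : Cmod (Cexp y) = exp (Re y).
Proof.
  unfold Cexp, Cmod. simpl. pose proof (exp_pos (Re y)). pose proof (sin2_cos2 (Im y)) as H2.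
  unfold Rsqr in H2.
  replace (exp (Re y) * cos (Im y) * (exp (Re y) * cos (Im y) * 1) +
           exp (Re y) * sin (Im y) * (exp (Re y) * sin (Im y) * 1)) with (exp (Re y) ^ 2).
  - apply sqrt_pow2. lra.
  - transitivity (exp (Re y) ^ 2 * (sin (Im y) * sin (Im y) + cos (Im y) * cos (Im y)));
      [rewrite H2|]; ring.
Qed.

Lemma Cmod_pow_n (z : C) n : Cmod (pow_n (K := C_Ring) z n) = Cmod z ^ n.
Proof.
  induction n as [|n IH]; simpl; [apply Cmod_1|].
  change (@mult C_Ring z (pow_n z n)) with (Cmult z (pow_n (K := C_Ring) z n)).
  rewrite Cmod_mult, IH. reflexivity.
Qed.

Definition exp_taylor (z : C) (n : nat) : C :=
  sumC (fun j => Cmult (RtoC (/ INR (fact j))) (pow_n z j)) n.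

(* [u |-> Re (w exp (u z))] for [z = (a, b)], a real function to which Taylor-Lagrange applies. *)
Definition re_exp_line (a b : R) (w : C) (u : R) : R :=
  fst w * (exp (u * a) * cos (u * b)) - snd w * (exp (u * a) * sin (u * b)).

Lemma re_exp_line_Re a b w u : re_exp_line a b w u = Re (Cmult w (Cexp (Cmult (RtoC u) (a, b)))).
Proof.
  unfold re_exp_line, Cexp, Cmult, RtoC. destruct w as [w1 w2]. simpl.
  replace (u * a - 0 * b) with (u * a) by ring. replace (u * b + 0 * a) with (u * b) by ring. ring.
Qed.

Lemma re_exp_line_derive a b w u :
  is_derive (re_exp_line a b w) u (re_exp_line a b (Cmult w (a, b)) u).
Proof. unfold re_exp_line. destruct w as [w1 w2]. simpl. auto_derive; auto. ring. Qed.

Lemma re_exp_line_Derive_n a b w m u :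
  Derive_n (re_exp_line a b w) m u = re_exp_line a b (Cmult w (pow_n (K := C_Ring) (a, b) m)) u.
Proof.
  revert u. induction m as [|m IH]; intros u.
  - simpl. change (@one C_Ring) with (RtoC 1). rewrite Cmult_1_r. reflexivity.
  - simpl. rewrite (Derive_ext _ (re_exp_line a b (Cmult w (pow_n (K := C_Ring) (a, b) m)))) by auto.
    rewrite (is_derive_unique _ _ _ (re_exp_line_derive a b _ u)).
    change (@mult C_Ring (a, b) (pow_n (K := C_Ring) (a, b) m))
      with (Cmult (a, b) (pow_n (K := C_Ring) (a, b) m)).
    f_equal. ring.
Qed.

Lemma re_exp_line_ex_derive_n a b w m u : ex_derive_n (re_exp_line a b w) m u.
Proof.
  destruct m as [|m]; simpl; auto.
  apply (ex_derive_ext (re_exp_line a b (Cmult w (pow_n (K := C_Ring) (a, b) m)))).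
  - intros; symmetry; apply re_exp_line_Derive_n.
  - eexists. apply re_exp_line_derive.
Qed.

Lemma Re_exp_taylor_remainder w z n :
  Rabs (Re (Cmult w (Cexp z)) - Re (Cmult w (exp_taylor z n))) <=
  Cmod w * (Cmod z ^ S n / INR (fact (S n)) * exp (Cmod z)).
Proof.
  destruct z as [a b]. set (g := re_exp_line a b w).
  destruct (Taylor_Lagrange g n 0 1) as [zeta [Hz Heq]];
    [lra|intros; apply re_exp_line_ex_derive_n|].
  assert (Hg1 : Re (Cmult w (Cexp (a, b))) = g 1).
  { unfold g. rewrite re_exp_line_Re. do 4 f_equal; unfold RtoC, Cmult; simpl; f_equal; ring. }
  assert (HT : Re (Cmult w (exp_taylor (a, b) n)) =
               sum_f_R0 (fun m => (1 - 0) ^ m / INR (fact m) * Derive_n g m 0) n).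
  { unfold exp_taylor. rewrite <- sumC_mult_l, Re_sumC, <- sum_n_Reals, <- sumR_sum_n.
    apply sumR_ext. intros m _. unfold g. rewrite re_exp_line_Derive_n, re_exp_line_Re.
    replace (Cmult (RtoC 0) (a, b)) with (RtoC 0) by (unfold RtoC, Cmult; simpl; f_equal; ring).
    rewrite Cexp_0, Rminus_0_r, pow1.
    destruct w as [w1 w2]. destruct (pow_n (K := C_Ring) (a, b) m) as [p1 p2].
    unfold Cmult, RtoC. simpl. field. apply not_0_INR, fact_neq_0. }
  rewrite Hg1, HT, Heq. unfold g. rewrite re_exp_line_Derive_n, re_exp_line_Re, Rminus_0_r, pow1.
  replace (sum_f_R0 _ n + _ - _) with
    (/ INR (fact (S n)) * Re (Cmult (Cmult w (pow_n (K := C_Ring) (a, b) (S n))) (Cexp (Cmult (RtoC zeta) (a, b)))))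
    by (unfold Rdiv; ring).
  assert (Hf : 0 < / INR (fact (S n))) by apply Rinv_0_lt_compat, lt_0_INR, lt_O_fact.
  assert (Hexp : exp (Re (Cmult (RtoC zeta) (a, b))) <= exp (Cmod (a, b))).
  { apply exp_le_exp. pose proof (re_le_Cmod (a, b)) as Ha. simpl in *.
    assert (zeta * a <= Rabs a) by (destruct (Rle_dec 0 a); [rewrite Rabs_right|rewrite Rabs_left]; nra).
    unfold Cmult, RtoC; simpl. lra. }
  rewrite Rabs_mult, Rabs_right by lra.
  eapply Rle_trans; [apply Rmult_le_compat_l, re_le_Cmod; lra|].
  rewrite !Cmod_mult, Cmod_Cexp, Cmod_pow_n.
  pose proof (Cmod_ge_0 w). pose proof (pow_le _ (S n) (Cmod_ge_0 (a, b))).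
  unfold Rdiv. apply (Rmult_le_compat_l (/ INR (fact (S n)) * (Cmod w * Cmod (a, b) ^ S n))) in Hexp;
    [nra|apply Rmult_le_pos; [lra|nra]].
Qed.

Lemma Re_mul_neg_i v : Re (Cmult (0, -1) v) = Im v.
Proof. destruct v. unfold Cmult, Re, Im. simpl. ring. Qed.

Lemma Cexp_taylor_remainder z n :
  Cmod (Cplus (Cexp z) (Copp (exp_taylor z n))) <=
  sqrt 2 * (Cmod z ^ S n / INR (fact (S n)) * exp (Cmod z)).
Proof.
  pose proof (Re_exp_taylor_remainder (RtoC 1) z n) as Hre.
  pose proof (Re_exp_taylor_remainder (0, -1) z n) as Him.
  rewrite !Cmult_1_l, Cmod_1, Rmult_1_l in Hre.
  rewrite !Re_mul_neg_i in Him.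
  replace (Cmod (0, -1)) with 1 in Him by
    (unfold Cmod; simpl; replace (0 * (0 * 1) + -1 * (-1 * 1)) with 1 by ring; symmetry; apply sqrt_1).
  rewrite Rmult_1_l in Him.
  eapply Rle_trans; [apply Cmod_2Rmax|]. apply Rmult_le_compat_l; [apply sqrt_pos|].
  apply Rmax_lub; [exact Hre|exact Him].
Qed.

Lemma exp_INR_mult n x : exp (INR n * x) = exp x ^ n.
Proof.
  induction n as [|n IH]; [simpl; rewrite Rmult_0_l, exp_0; reflexivity|].
  rewrite S_INR, Rmult_plus_distr_r, Rmult_1_l, exp_plus, IH. simpl. ring.
Qed.

Lemma exp_INR_le_pow3 U : exp (INR U) <= 3 ^ U.
Proof.
  rewrite <- (Rmult_1_r (INR U)), exp_INR_mult.
  apply pow_incr. split; [left; apply exp_pos|apply exp_le_3].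
Qed.

Lemma pow_self_div_fact_le U : INR U ^ U / INR (fact U) <= 3 ^ U.
Proof.
  eapply Rle_trans; [|apply exp_INR_le_pow3].
  eapply Rle_trans; [|apply (exp_ge_taylor (INR U) U (pos_INR U))].
  rewrite <- sum_n_Reals, <- sumR_sum_n. destruct U as [|U]; [rewrite sumR_O; lra|].
  rewrite sumR_S. assert (0 <= sumR (fun k => INR (S U) ^ k / INR (fact k)) U); [|lra].
  apply sumR_ge0. intros. apply Rmult_le_pos; [apply pow_le, pos_INR|].
  left. apply Rinv_0_lt_compat, lt_0_INR, lt_O_fact.
Qed.

Lemma sqrt2_le : sqrt 2 <= 1.4143.
Proof. pose proof (sqrt_sqrt 2 ltac:(lra)). pose proof (sqrt_pos 2). nra. Qed.

Lemma exp_015_le : exp 0.15 <= / 0.85.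
Proof.
  pose proof (exp_ineq1_le (-0.15)). pose proof (exp_pos 0.15).
  assert (exp 0.15 * exp (-0.15) = 1) by (rewrite <- exp_plus, <- exp_0; f_equal; lra).
  apply (Rmult_le_reg_r 0.85); [lra|]. rewrite Rinv_l by lra. nra.
Qed.

(* With [x = 3 c / U <= 0.213]: [c ^ U / U! <= x ^ U] by [U ^ U / U! <= 3 ^ U], and
   [exp (2 c) <= exp 0.15 ^ U], while [0.213 * exp 0.15 < 1 / 4]. *)
Lemma taylor_ratio_le c U : 0 <= c -> (1 <= U)%nat -> 20 * c <= sqrt 2 * INR U ->
  c ^ U / INR (fact U) * exp (2 * c) <= (/ 4) ^ U.
Proof.
  intros Hc HU H. assert (HU' : 1 <= INR U) by (apply (le_INR 1); auto).
  pose proof sqrt2_le. pose proof (lt_0_INR _ (lt_O_fact U)).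
  set (x := 3 * c / INR U).
  assert (Hx0 : 0 <= x) by (unfold x; apply Rmult_le_pos; [lra|left; apply Rinv_0_lt_compat; lra]).
  assert (Hx : x <= 3 * 1.4143 / 20).
  { unfold x. apply (Rmult_le_reg_r (INR U)); [lra|]. unfold Rdiv. rewrite Rmult_assoc, Rinv_l by lra. nra. }
  assert (E1 : c ^ U / INR (fact U) <= x ^ U).
  { replace c with (x / 3 * INR U) by (unfold x; field; lra).
    rewrite Rpow_mult_distr. unfold Rdiv at 1. rewrite Rmult_assoc.
    pose proof (pow_self_div_fact_le U). pose proof (pow_le (x / 3) U ltac:(unfold Rdiv; lra)).
    apply Rle_trans with ((x / 3) ^ U * 3 ^ U); [apply Rmult_le_compat_l; auto|].
    rewrite <- Rpow_mult_distr. right. f_equal. field. }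
  assert (E2 : exp (2 * c) <= exp 0.15 ^ U) by (rewrite <- exp_INR_mult; apply exp_le_exp; nra).
  eapply Rle_trans.
  { apply Rmult_le_compat; eauto; [|left; apply exp_pos].
    apply Rmult_le_pos; [apply pow_le; auto|left; apply Rinv_0_lt_compat; lra]. }
  rewrite <- Rpow_mult_distr. apply pow_incr. pose proof exp_015_le. pose proof (exp_pos 0.15).
  split; [nra|]. apply Rle_trans with (3 * 1.4143 / 20 * / 0.85); [apply Rmult_le_compat|]; lra.
Qed.

(* The remainder is at most [exp (- |z|) / 2 <= |exp z| / 2], which keeps the partial sum
   away from [0]. *)
Lemma Cexp_taylor_relative z U : (1 <= U)%nat -> 20 * Cmod z <= sqrt 2 * INR U ->
  exists E : C, Cmod E <= 2 * sqrt 2 * (/ 4) ^ U /\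
    Cexp z = Cmult (Cplus (RtoC 1) E) (exp_taylor z (U - 1)).
Proof.
  intros HU Hz. set (D := exp_taylor z (U - 1)). set (R := Cplus (Cexp z) (Copp D)).
  set (c := Cmod z). set (B := sqrt 2 * (c ^ U / INR (fact U) * exp c)).
  assert (Hc0 : 0 <= c) by apply Cmod_ge_0.
  pose proof (exp_pos c). pose proof (exp_pos (- c)). pose proof (sqrt_pos 2). pose proof sqrt2_le.
  assert (Hexpc : exp (- c) * exp c = 1) by (rewrite <- exp_plus, <- exp_0; f_equal; lra).
  assert (HR : Cmod R <= B).
  { pose proof (Cexp_taylor_remainder z (U - 1)) as HT. replace (S (U - 1)) with U in HT by lia. exact HT. }
  assert (HB2 : 2 * B * exp c <= 2 * sqrt 2 * (/ 4) ^ U).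
  { pose proof (taylor_ratio_le c U Hc0 HU Hz). unfold B.
    replace (2 * c) with (c + c) in H3 by ring. rewrite exp_plus in H3.
    replace (2 * (sqrt 2 * (c ^ U / INR (fact U) * exp c)) * exp c)
      with (2 * sqrt 2 * (c ^ U / INR (fact U) * (exp c * exp c))) by ring.
    apply Rmult_le_compat_l; lra. }
  assert (H4U : (/ 4) ^ U <= / 4).
  { replace U with (S (U - 1)) by lia. simpl. pose proof (pow_le (/4) (U - 1) ltac:(lra)).
    assert ((/4) ^ (U - 1) <= 1) by (rewrite <- (pow1 (U - 1)); apply pow_incr; lra). nra. }
  assert (HB : B <= exp (- c) / 2) by (apply (Rmult_le_reg_r (exp c)); nra).
  assert (HD : exp (- c) / 2 <= Cmod D).
  { assert (Hlow : exp (- c) <= Cmod (Cexp z)).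
    { rewrite Cmod_Cexp. apply exp_le_exp. pose proof (re_le_Cmod z) as Hre.
      pose proof (Rle_abs (- Re z)) as Hneg. rewrite Rabs_Ropp in Hneg. fold c in Hre. lra. }
    pose proof (Cmod_triangle D R). replace (Cplus D R) with (Cexp z) in H3 by (unfold R; ring). lra. }
  assert (HD0 : D <> RtoC 0) by (intros E; rewrite E, Cmod_0 in HD; lra).
  exists (Cmult R (Cinv D)). split.
  - rewrite Cmod_mult, Cmod_inv by auto.
    apply Rle_trans with (B * / (exp (- c) / 2)).
    + apply Rmult_le_compat; auto using Cmod_ge_0; [left; apply Rinv_0_lt_compat; lra|].
      apply Rinv_le_contravar; lra.
    + replace (B * / (exp (- c) / 2)) with (2 * B * exp c); auto.
      rewrite exp_Ropp. field. lra.
  - replace (Cexp z) with (Cplus D R) by (unfold R; ring).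
    replace (Cmult (Cplus (RtoC 1) (Cmult R (Cinv D))) D) with (Cplus D (Cmult R (Cmult (Cinv D) D))) by ring.
    rewrite Cinv_l by auto. ring.
Qed.

Lemma pow_n_scale k (z : C) j :
  pow_n (K := C_Ring) (Cmult (RtoC k) z) j = Cmult (RtoC (k ^ j)) (pow_n (K := C_Ring) z j).
Proof.
  induction j as [|j IH]; simpl; change (@one C_Ring) with (RtoC 1); [ring|].
  change (@mult C_Ring ?x ?y) with (Cmult x y). rewrite IH, RtoC_mult. ring.
Qed.

Lemma Dtk_exp_taylor X T k t : 0 <= W0 k T ->
  Dtk X T k t = exp_taylor (Cmult (RtoC k) (F X t)) (Z.to_nat (up (W0 k T)) - 1).
Proof.
  intros HW. set (W := W0 k T) in *. destruct (archimed W) as [A1 A2].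
  assert (HU : (1 <= Z.to_nat (up W))%nat) by (apply (lt_up_of_le W 0); simpl; lra).
  unfold Dtk. fold W. rewrite (sumC_extend _ (Z.to_nat (up W) - 1) (Z.to_nat (up W))).
  - unfold exp_taylor. apply sumC_ext. intros j Hj. destruct Rle_dec as [|Hn].
    + rewrite pow_n_scale, Cmult_assoc, <- RtoC_mult. unfold Rdiv. rewrite Rmult_comm. reflexivity.
    + contradict Hn. apply Rle_trans with (INR (Z.to_nat (up W) - 1)); [apply le_INR; auto|].
      rewrite minus_INR, INR_IZR_INZ, Z2Nat.id by lia. simpl. lra.
  - lia.
  - intros i Hi. replace i with (Z.to_nat (up W)) by lia. destruct Rle_dec as [Hr|]; auto.
    rewrite INR_IZR_INZ, Z2Nat.id in Hr by lia. lra.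
Qed.

Lemma PX_pow_error X T k t : inS T X t ->
  exists E : C, Cmod E <= 3 * exp (- 19 * Rabs k * V0 T) /\
    PX_pow X k t = Cmult (Cplus (RtoC 1) E) (Dtk X T k t).
Proof.
  intros [_ [HRe HIm]]. set (V := V0 T) in *. pose proof (Rabs_pos k).
  assert (HV : 0 <= V) by (pose proof (Rabs_pos (Re (F X t))); lra).
  assert (HW : 0 <= W0 k T) by (unfold W0; fold V; nra).
  set (U := Z.to_nat (up (W0 k T))).
  assert (HUW : W0 k T < INR U).
  { destruct (archimed (W0 k T)). unfold U. rewrite INR_IZR_INZ, Z2Nat.id; [lra|].
    apply le_IZR. lra. }
  assert (HU : (1 <= U)%nat) by (apply (lt_up_of_le _ 0); simpl; lra).
  set (z := Cmult (RtoC k) (F X t)).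
  assert (Hz : Cmod z <= Rabs k * (sqrt 2 * V)).
  { unfold z. rewrite Cmod_mult, Cmod_R. apply Rmult_le_compat_l; auto.
    eapply Rle_trans; [apply Cmod_2Rmax|]. apply Rmult_le_compat_l; [apply sqrt_pos|].
    apply Rmax_lub; auto. }
  assert (Hz20 : 20 * Cmod z <= sqrt 2 * INR U).
  { unfold W0 in HUW. fold V in HUW. pose proof (sqrt_pos 2).
    apply Rle_trans with (sqrt 2 * (20 * Rabs k * V)); nra. }
  destruct (Cexp_taylor_relative z U HU Hz20) as [E [HE Hexp]].
  exists E. split.
  - eapply Rle_trans; [apply HE|].
    assert (H3U : (/ 4) ^ U <= exp (- INR U)).
    { rewrite exp_Ropp, pow_inv. apply Rinv_le_contravar; [apply exp_pos|].
      eapply Rle_trans; [apply exp_INR_le_pow3|apply pow_incr; lra]. }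
    assert (Hk : exp (- INR U) <= exp (- 19 * Rabs k * V)).
    { apply exp_le_exp. unfold W0 in HUW. fold V in HUW. nra. }
    pose proof sqrt2_le. pose proof (pow_le (/ 4) U ltac:(lra)). nra.
  - rewrite Dtk_exp_taylor by auto. exact Hexp.
Qed.

Theorem lemma5 :
  forall k : R,
  exists C0 T0 X0 : R, 0 < C0 /\
  forall T X : R, T0 <= T -> X0 <= X ->
    (* (i) support and size of alpha_k *)
    (forall n : nat, (1 <= n)%nat ->
        (alpha X T k n <> 0 -> INR n <= Rpower X (W0 k T)) /\
        Rabs (alpha X T k n) <= dk (Rabs k) n) /\
    (* (ii) the multiplicative model beta_k *)
    (exists beta : nat -> R,
        multiplicative beta /\
        forall n : nat, (1 <= n)%nat ->
          (INR (Omega n) <= W0 k T -> alpha X T k n = beta n) /\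
          ((forall p m : nat, prime (Z.of_nat p) -> (1 <= m)%nat ->
               Nat.divide (p ^ m) n -> INR (p ^ m) <= X) ->
             beta n = dk k n) /\
          Rabs (beta n) <= dk (Rabs k) n) /\
    forall t : R, inS T X t ->
      (* D(t,k) = sum_{n in S(X)} alpha_k(n) n^{-1/2-it} *)
      Dtk X T k t =
        sumC (fun n => if Nat.leb 1 n && smoothb X n
                       then Cmult (RtoC (alpha X T k n)) (npow_neg n (half_it t))
                       else RtoC 0)
             (Z.to_nat (up (Rpower X (W0 k T)))) /\
      (* P_X(1/2+it)^k = (1 + O(e^{-19|k|V0})) D(t,k) *)
      exists E : C,
        Cmod E <= C0 * exp (- 19 * Rabs k * V0 T) /\
        PX_pow X k t = Cmult (Cplus (RtoC 1) E) (Dtk X T k t).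
Proof.
  intros k. exists 3, 0, 2. split; [lra|]. intros T X _ HX. split; [|split].
  - intros n Hn. split; [apply alpha_support; lra|apply alpha_abs_le; auto].
  - exists (beta X k). split; [apply beta_multiplicative|].
    intros n Hn. split; [|split].
    + apply alpha_eq_beta; auto.
    + apply beta_eq_dk; auto.
    + apply beta_abs_le_dk; auto.
  - intros t Ht. split; [apply Dtk_dirichlet; lra|apply PX_pow_error; auto].
Qed.
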